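(* Let $H$ and $K$ be arbitrary groups, and let $A\le H$ and $B\le K$ be isomorphic subgroups. Let $G=H\ast_{A=B}K$ be the amalgamated free product (amalgamating $A$ with $B$ via a fixed isomorphism). Then: (1) $G$ is weakly hyperbolic relative to $\{H,K\}$. (2) If $H$ is weakly hyperbolic relative to $\{A\}$ and $K$ is weakly hyperbolic relative to $\{B\}$, then $G$ is weakly hyperbolic relative to $\{A\}$.
   Context: Let $G$ be a group and $\mathcal H=\{H_1,\ldots,H_m\}$ a collection of subgroups of $G$. A subset $X\subset G$ is a relative generating set of $G$ with respect to $\mathcal H$ if $G$ is generated by $X\cup H_1\cup\cdots\cup H_m$. The relative Cayley graph of $G$ with respect to $\mathcal H$ (and $X$) is the Cayley graph of $G$ with respect to the generating set $X\cup H_1\cup\cdots\cup H_m$, with the combinatorial metric (every edge has length 1). $G$ is weakly hyperbolic relative to $\mathcal H$ if there exists a finite relative generating set $X$ of $G$ with respect to $\mathcal H$ such that the corresponding relative Cayley graph is a hyperbolic metric space. *)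

From Stdlib Require Import ZArith List.
Import ListNotations.

Record group := Group {
  carrier :> Type;
  gmul : carrier -> carrier -> carrier;
  gone : carrier;
  ginv : carrier -> carrier;
  gmulA : forall x y z, gmul x (gmul y z) = gmul (gmul x y) z;
  gmul1l : forall x, gmul gone x = x;
  gmul1r : forall x, gmul x gone = x;
  gmulVl : forall x, gmul (ginv x) x = gone;
  gmulVr : forall x, gmul x (ginv x) = gone }.

Arguments gmul {g}.
Arguments gone {g}.
Arguments ginv {g}.

Definition is_subgroup {G : group} (A : G -> Prop) : Prop :=
  A gone /\ (forall x y, A x -> A y -> A (gmul x y)) /\ (forall x, A x -> A (ginv x)).

Definition is_hom {G L : group} (f : G -> L) : Prop :=
  forall x y, f (gmul x y) = gmul (f x) (f y).

Definition is_iso_on {H K : group} (A : H -> Prop) (B : K -> Prop) (phi : H -> K) : Prop :=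
  (forall a, A a -> B (phi a)) /\
  (forall a a', A a -> A a' -> phi (gmul a a') = gmul (phi a) (phi a')) /\
  (forall a a', A a -> A a' -> phi a = phi a' -> a = a') /\
  (forall b, B b -> exists a, A a /\ phi a = b).

(** [G] with [iH], [iK] is the amalgamated free product H *_{A = B} K
    (amalgamation via phi), characterised by its universal property
    (the pushout of H <- A -> K in the category of groups). *)
Definition is_amalgam {H K G : group} (A : H -> Prop) (phi : H -> K)
    (iH : H -> G) (iK : K -> G) : Prop :=
  is_hom iH /\ is_hom iK /\
  (forall a, A a -> iH a = iK (phi a)) /\
  (forall (L : group) (f : H -> L) (g : K -> L),
      is_hom f -> is_hom g -> (forall a, A a -> f a = g (phi a)) ->
      exists u : G -> L, is_hom u /\ (forall h, u (iH h) = f h) /\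
        (forall k, u (iK k) = g k) /\
        (forall v : G -> L, is_hom v -> (forall h, v (iH h) = f h) ->
            (forall k, v (iK k) = g k) -> forall x, v x = u x)).

Definition word_in {G : group} (S : G -> Prop) (l : list G) : Prop :=
  Forall (fun x => S x \/ S (ginv x)) l.

Definition word_prod {G : group} (l : list G) : G := fold_right gmul gone l.

Definition generates {G : group} (S : G -> Prop) : Prop :=
  forall g : G, exists l, word_in S l /\ word_prod l = g.

(** [d] is the combinatorial (word) metric of the Cayley graph of G w.r.t. S,
    restricted to vertices: d g h <= n iff g^-1 h is a product of at most n
    letters from S ∪ S^-1. *)
Definition word_metric {G : group} (S : G -> Prop) (d : G -> G -> nat) : Prop :=
  forall g h n, d g h <= n <->
    exists l, word_in S l /\ length l <= n /\ word_prod l = gmul (ginv g) h.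

(** Twice the Gromov product (x|y)_w. *)
Definition gromov2 {T : Type} (d : T -> T -> nat) (x y w : T) : Z :=
  (Z.of_nat (d x w) + Z.of_nat (d y w) - Z.of_nat (d x y))%Z.

Definition gromov_hyperbolic {T : Type} (d : T -> T -> nat) : Prop :=
  exists delta : nat, forall x y z w : T,
    (Z.min (gromov2 d x z w) (gromov2 d y z w) - Z.of_nat delta <= gromov2 d x y w)%Z.

Definition weakly_hyperbolic (G : group) (Hs : list (G -> Prop)) : Prop :=
  exists X : list G,
    let S := fun x : G => In x X \/ Exists (fun P : G -> Prop => P x) Hs in
    generates S /\ exists d : G -> G -> nat, word_metric S d /\ gromov_hyperbolic d.

Definition image {H G : group} (f : H -> G) (P : H -> Prop) : G -> Prop :=
  fun g => exists h, P h /\ f h = g.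

(* The amalgam acts on normal forms (alternating words of coset representatives followed by an
   element of [A]), so every element has a unique normal form.  Read backwards, normal forms are
   paths in the Bass-Serre tree: the Cayley graph of [G] with respect to [X_H u X_K u A] is a tree
   of pieces, the cosets [g H] and [g K], glued along cosets of [A].  As [A] lies in the generating
   set, these edge cosets have diameter at most 1 and separate the graph, and a 1-Lipschitz
   retraction shows that every piece is an isometric copy of the Cayley graph of its factor.  The
   four-point condition then follows by induction down the tree: four points are either split two
   against two by an edge coset, or can be pushed through edge cosets, at bounded cost, onto a
   single piece, where the hyperbolicity of [H] or [K] applies.  Part (1) is the case where [H]
   and [K] are entirely in the generating set, so that every piece has diameter at most 1. *)

From Stdlib Require Import List.
Import ListNotations.
From Stdlib Require Import Lia.
From Stdlib Require Import ClassicalEpsilon ProofIrrelevance FunctionalExtensionality PropExtensionality Classical.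

(** * Groups, words and word metrics *)

Section GroupFacts.
Variable G : group.
Implicit Types x y z : G.

Lemma gmul_cancel_l x y z : gmul x y = gmul x z -> y = z.
Proof. intro E. rewrite <- (gmul1l G y), <- (gmul1l G z), <- (gmulVl G x), <- !gmulA, E. reflexivity. Qed.

Lemma ginvK x : ginv (ginv x) = x.
Proof. apply (gmul_cancel_l (ginv x)). rewrite gmulVr, gmulVl. reflexivity. Qed.

Lemma ginv_mul x y : ginv (gmul x y) = gmul (ginv y) (ginv x).
Proof. apply (gmul_cancel_l (gmul x y)). rewrite gmulVr, <- gmulA, (gmulA _ y), gmulVr, gmul1l, gmulVr. reflexivity. Qed.

Lemma ginv_one : ginv (@gone G) = gone.
Proof. rewrite <- (gmul1l G (ginv gone)). apply gmulVr. Qed.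

Lemma mulKg x y : gmul (ginv x) (gmul x y) = y.
Proof. rewrite gmulA, gmulVl, gmul1l. reflexivity. Qed.

Lemma mulKVg x y : gmul x (gmul (ginv x) y) = y.
Proof. rewrite gmulA, gmulVr, gmul1l. reflexivity. Qed.

Lemma mulgK x y : gmul (gmul x y) (ginv y) = x.
Proof. rewrite <- gmulA, gmulVr, gmul1r. reflexivity. Qed.

Lemma eq_of_ginv_mul_one x y : gmul (ginv x) y = gone -> x = y.
Proof. intro E. apply (gmul_cancel_l (ginv x)). rewrite E, gmulVl. reflexivity. Qed.

End GroupFacts.

Lemma hom_one {G L : group} (f : G -> L) : is_hom f -> f gone = gone.
Proof. intro Hf. apply (gmul_cancel_l _ (f gone)). rewrite <- Hf, !gmul1r. reflexivity. Qed.

Lemma hom_inv {G L : group} (f : G -> L) x : is_hom f -> f (ginv x) = ginv (f x).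
Proof. intro Hf. apply (gmul_cancel_l _ (f x)). rewrite <- Hf, !gmulVr. apply hom_one; auto. Qed.

Section Subgroups.
Variables (G : group) (A : G -> Prop).
Hypothesis HA : is_subgroup A.

Lemma subgroup_one : A gone. Proof. apply HA. Qed.

Lemma subgroup_mul x y : A x -> A y -> A (gmul x y). Proof. apply HA. Qed.

Lemma subgroup_inv x : A x -> A (ginv x). Proof. apply HA. Qed.

Lemma subgroup_inv_rev x : A (ginv x) -> A x.
Proof. intro. rewrite <- (ginvK G x). now apply subgroup_inv. Qed.

End Subgroups.

Section Words.
Variable G : group.
Implicit Types (S : G -> Prop) (l : list G).

Lemma word_prod_app l1 l2 : word_prod (l1 ++ l2) = gmul (word_prod l1) (word_prod l2).
Proof. induction l1; simpl. now rewrite gmul1l. rewrite IHl1, gmulA. reflexivity. Qed.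

Lemma word_in_inv S l : word_in S l -> word_in S (rev (map ginv l)).
Proof.
  intro W. apply Forall_rev, Forall_map.
  eapply Forall_impl; [|exact W]. simpl. intros a [Ha|Ha]; [right; now rewrite ginvK|left; auto].
Qed.

Lemma word_prod_inv l : word_prod (rev (map ginv l)) = ginv (word_prod l).
Proof. induction l; simpl. now rewrite ginv_one. rewrite word_prod_app, IHl, ginv_mul. simpl. rewrite gmul1r. auto. Qed.

Lemma word_in_ext S S' l : (forall a, S a <-> S' a) -> word_in S l -> word_in S' l.
Proof. intros E W. eapply Forall_impl; [|exact W]. simpl. intros a [Ha|Ha]; [left|right]; apply E; auto. Qed.

Lemma app_cons_inj {T : Type} (m m' : list T) s s' r : m ++ s :: r = m' ++ s' :: r -> s = s' /\ m = m'.
Proof.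
  intro E. rewrite <- (app_nil_l r), !app_comm_cons, !app_assoc in E.
  apply app_inv_tail, app_inj_tail in E. tauto.
Qed.

Lemma cons_app_cons_inj {T : Type} (s s' : T) Q m : s :: Q = m ++ s' :: Q -> s = s' /\ m = [].
Proof. intro E. apply (app_cons_inj [] m s s' Q) in E. destruct E; split; congruence. Qed.

End Words.

Lemma word_in_map {X Y : group} (f : X -> Y) (S : X -> Prop) (S' : Y -> Prop) l : is_hom f ->
  (forall x, S x -> S' (f x)) -> word_in S l -> word_in S' (map f l).
Proof.
  intros Hf T W. apply Forall_map. eapply Forall_impl; [|exact W]. simpl.
  intros a [Xa|Xa]; [left; auto|right; rewrite <- hom_inv; auto].
Qed.

Lemma word_prod_map {X Y : group} (f : X -> Y) (l : list X) : is_hom f -> word_prod (map f l) = f (word_prod l).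
Proof. intro Hf. induction l; simpl. symmetry. apply hom_one; auto. rewrite Hf, IHl. auto. Qed.

Section WordMetric.
Context {G : group} {S : G -> Prop} {d : G -> G -> nat}.
Hypothesis Hd : word_metric S d.

Lemma word_metric_le x y l : word_in S l -> word_prod l = gmul (ginv x) y -> d x y <= length l.
Proof. intros. apply Hd. exists l. auto. Qed.

Lemma word_metric_witness x y : exists l, word_in S l /\ length l <= d x y /\ word_prod l = gmul (ginv x) y.
Proof. apply Hd. lia. Qed.

Lemma word_metric_refl x : d x x = 0.
Proof. enough (d x x <= 0) by lia. apply (word_metric_le x x []). constructor. simpl. now rewrite gmulVl. Qed.

Lemma word_metric_triangle x y z : d x z <= d x y + d y z.
Proof.
  destruct (word_metric_witness x y) as (l1 & W1 & L1 & P1).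
  destruct (word_metric_witness y z) as (l2 & W2 & L2 & P2).
  enough (d x z <= length (l1 ++ l2)) by (rewrite length_app in *; lia).
  apply word_metric_le. apply Forall_app; auto. rewrite word_prod_app, P1, P2, <- gmulA, mulKVg. auto.
Qed.

Lemma word_metric_ginv_mul_le x y x' y' : gmul (ginv x) y = gmul (ginv x') y' -> d x' y' <= d x y.
Proof.
  intro E. destruct (word_metric_witness x y) as (l & W & L & P).
  enough (d x' y' <= length l) by lia. apply word_metric_le; congruence.
Qed.

Lemma word_metric_ginv_mul x y x' y' : gmul (ginv x) y = gmul (ginv x') y' -> d x y = d x' y'.
Proof.
  intro E. pose proof (word_metric_ginv_mul_le x y x' y' E).
  pose proof (word_metric_ginv_mul_le x' y' x y (eq_sym E)). lia.
Qed.

Lemma word_metric_translate g x y : d (gmul g x) (gmul g y) = d x y.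
Proof. apply word_metric_ginv_mul. rewrite ginv_mul, <- gmulA, mulKg. auto. Qed.

Lemma word_metric_sym x y : d x y = d y x.
Proof.
  destruct (word_metric_witness x y) as (l & W & L & P).
  assert (d y x <= length (rev (map ginv l))).
  { apply word_metric_le. now apply word_in_inv. rewrite word_prod_inv, P, ginv_mul, ginvK. auto. }
  destruct (word_metric_witness y x) as (l' & W' & L' & P').
  assert (d x y <= length (rev (map ginv l'))).
  { apply word_metric_le. now apply word_in_inv. rewrite word_prod_inv, P', ginv_mul, ginvK. auto. }
  rewrite length_rev, length_map in *. lia.
Qed.

Lemma word_metric_letter x a : S a \/ S (ginv a) -> d x (gmul x a) <= 1.
Proof. intro Ha. apply (word_metric_le _ _ [a]). constructor; auto. simpl. rewrite gmul1r, mulKg. auto. Qed.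

End WordMetric.

Lemma word_metric_ext {G : group} (S S' : G -> Prop) d :
  (forall a, S a <-> S' a) -> word_metric S d -> word_metric S' d.
Proof.
  intros E Hd g h n. rewrite (Hd g h n).
  split; intros (l & W & R); exists l; split; auto; eapply word_in_ext; eauto; firstorder.
Qed.

Lemma nat_least (P : nat -> Prop) n : P n -> exists m, P m /\ forall k, P k -> m <= k.
Proof.
  revert P. induction n as [n IH] using (well_founded_induction Wf_nat.lt_wf). intros P Pn.
  destruct (classic (exists k, P k /\ k < n)) as [[k [Pk Lk]]|N].
  - exact (IH k Lk P Pk).
  - exists n. split; auto. intros k Pk. assert (n <= k \/ k < n) as [|] by lia; auto. exfalso; eauto.
Qed.

Lemma word_metric_exists {G : group} (S : G -> Prop) : generates S -> exists d, word_metric S d.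
Proof.
  intro Gen.
  set (P := fun (g h : G) n => exists l, word_in S l /\ length l = n /\ word_prod l = gmul (ginv g) h).
  assert (Ex : forall g h, exists m, P g h m /\ forall k, P g h k -> m <= k).
  { intros g h. destruct (Gen (gmul (ginv g) h)) as [l [W E]]. apply (nat_least _ (length l)). exists l. auto. }
  exists (fun g h => epsilon (inhabits 0) (fun m => P g h m /\ forall k, P g h k -> m <= k)).
  intros g h n. pose proof (epsilon_spec (inhabits 0) _ (Ex g h)) as [[l (W & L & E)] M].
  split.
  - intro Le. exists l. split; auto. split; auto. lia.
  - intros (l' & W' & L' & E'). enough (length l <= length l') by lia. rewrite L. apply M. exists l'. auto.
Qed.

Lemma generates_of_words {G : group} (S S' : G -> Prop) : generates S' ->
  (forall a, S' a -> exists l, word_in S l /\ word_prod l = a) -> generates S.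
Proof.
  intros Gen T g. destruct (Gen g) as [l [W E]]. subst g. induction l as [|a l IH].
  - exists []. split; auto. constructor.
  - inversion W as [|? ? Wa Wl]; subst. destruct (IH Wl) as [l2 [W2 E2]].
    assert (La : exists l1, word_in S l1 /\ word_prod l1 = a).
    { destruct Wa as [X|X]; auto. destruct (T _ X) as [l1 [W1 E1]]. exists (rev (map ginv l1)). split.
      - apply word_in_inv; auto.
      - rewrite word_prod_inv, E1, ginvK. auto. }
    destruct La as [l1 [W1 E1]]. exists (l1 ++ l2). split.
    + apply Forall_app; auto.
    + rewrite word_prod_app. simpl. congruence.
Qed.

Definition four_point {T} (d : T -> T -> nat) (delta : nat) (x y z w : T) : Prop :=
  let a := d x y + d z w in let b := d x z + d y w in let c := d x w + d y z in
  a <= Nat.max b c + delta /\ b <= Nat.max a c + delta /\ c <= Nat.max a b + delta.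

Section FourPoint.
Context {T : Type} (d : T -> T -> nat) (Hs : forall x y, d x y = d y x).

Lemma four_point_swap12 dl x y z w : four_point d dl x y z w -> four_point d dl y x z w.
Proof. unfold four_point. rewrite (Hs y x), (Hs y z), (Hs y w), (Hs x z), (Hs x w). lia. Qed.

Lemma four_point_swap23 dl x y z w : four_point d dl x y z w -> four_point d dl x z y w.
Proof. unfold four_point. rewrite (Hs z y). lia. Qed.

Lemma four_point_swap34 dl x y z w : four_point d dl x y z w -> four_point d dl x y w z.
Proof. unfold four_point. rewrite (Hs w z). lia. Qed.

Lemma four_point_mono dl dl' x y z w : dl <= dl' -> four_point d dl x y z w -> four_point d dl' x y z w.
Proof. unfold four_point. lia. Qed.

Lemma four_point_hyperbolic dl : (forall x y z w, four_point d dl x y z w) -> gromov_hyperbolic d.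
Proof.
  intro H. exists dl. intros x y z w. destruct (H x y z w) as (H1 & H2 & H3).
  unfold gromov2. rewrite (Hs y w), (Hs x w) in *. lia.
Qed.

Lemma hyperbolic_four_point : gromov_hyperbolic d -> exists dl, forall x y z w, four_point d dl x y z w.
Proof.
  intros [dl H]. exists dl. intros x y z w. unfold four_point.
  pose proof (H x y z w). pose proof (H x z y w). pose proof (H y z x w).
  unfold gromov2 in *. rewrite ?(Hs w x), ?(Hs w y), ?(Hs w z), ?(Hs z x), ?(Hs z y), ?(Hs y x) in *.
  lia.
Qed.

End FourPoint.

Lemma full_word_metric_hyperbolic {G : group} (d : G -> G -> nat) :
  word_metric (fun _ => True) d -> gromov_hyperbolic d.
Proof.
  intro Hd. assert (B1 : forall x y, d x y <= 1).
  { intros x y. rewrite <- (mulKVg G x y). apply (word_metric_letter Hd); auto. }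
  apply (four_point_hyperbolic d (word_metric_sym Hd) 2). intros x y z w. unfold four_point.
  pose proof (B1 x y). pose proof (B1 z w). pose proof (B1 x z).
  pose proof (B1 y w). pose proof (B1 x w). pose proof (B1 y z). lia.
Qed.

Section CosetRepresentatives.
Variables (G : group) (A : G -> Prop).
Hypothesis HA : is_subgroup A.

Definition coset_rep (h : G) : G :=
  if excluded_middle_informative (A h) then gone
  else epsilon (inhabits gone) (fun t => A (gmul (ginv h) t)).

Let A1 := subgroup_one G A HA.
Let AM := subgroup_mul G A HA.
Let AV := subgroup_inv G A HA.

Lemma coset_rep_spec h : A (gmul (ginv h) (coset_rep h)).
Proof.
  unfold coset_rep. destruct excluded_middle_informative as [Ah|Ah].
  - rewrite gmul1r. auto.
  - apply epsilon_spec. exists h. rewrite gmulVl. auto.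
Qed.

Lemma same_coset_iff h h' : A (gmul (ginv h) h') -> forall t, A (gmul (ginv h) t) <-> A (gmul (ginv h') t).
Proof.
  intros E t. split; intro Z.
  - replace (gmul (ginv h') t) with (gmul (ginv (gmul (ginv h) h')) (gmul (ginv h) t)); auto.
    rewrite ginv_mul, ginvK, <- gmulA, mulKVg. auto.
  - replace (gmul (ginv h) t) with (gmul (gmul (ginv h) h') (gmul (ginv h') t)); auto.
    rewrite <- gmulA, mulKVg. auto.
Qed.

Lemma coset_rep_eq h h' : A (gmul (ginv h) h') -> coset_rep h = coset_rep h'.
Proof.
  intro E. pose proof (same_coset_iff h h' E) as C.
  assert (Ah : A h <-> A h').
  { pose proof (C gone) as C1. rewrite !gmul1r in C1.
    split; intro X; apply (subgroup_inv_rev G A HA); [apply C1|apply <- C1]; auto. }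
  unfold coset_rep.
  destruct (excluded_middle_informative (A h)) as [X|X];
  destruct (excluded_middle_informative (A h')) as [Y|Y]; try tauto.
  f_equal. apply functional_extensionality. intro t. apply propositional_extensionality. apply C.
Qed.

Lemma coset_repK h : coset_rep (coset_rep h) = coset_rep h.
Proof. symmetry. apply coset_rep_eq. apply coset_rep_spec. Qed.

Lemma coset_rep_notin h : ~ A h -> ~ A (coset_rep h).
Proof.
  intros N R. apply N, (subgroup_inv_rev G A HA).
  rewrite <- (mulgK G (ginv h) (coset_rep h)). pose proof (coset_rep_spec h). auto.
Qed.

Lemma coset_rep_mulr t a : A a -> coset_rep (gmul t a) = coset_rep t.
Proof. intro. symmetry. apply coset_rep_eq. rewrite mulKg. auto. Qed.

Lemma coset_rep_ginv_mul h : A (gmul (ginv (coset_rep h)) h).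
Proof. pose proof (AV _ (coset_rep_spec h)) as X. rewrite ginv_mul, ginvK in X. auto. Qed.

End CosetRepresentatives.

Section SymmetricGroup.
Variable X : Type.

Record perm_of := mk_perm {
  perm_fun : X -> X;
  perm_inv_fun : X -> X;
  perm_funK : forall x, perm_inv_fun (perm_fun x) = x;
  perm_inv_funK : forall x, perm_fun (perm_inv_fun x) = x }.

Lemma perm_ext (p q : perm_of) : (forall x, perm_fun p x = perm_fun q x) -> p = q.
Proof.
  destruct p as [f g H1 H2], q as [f' g' H1' H2']. simpl. intro E.
  assert (f = f') by (apply functional_extensionality; auto). subst f'.
  assert (g = g').
  { apply functional_extensionality. intro x. rewrite <- (H2' x) at 1. rewrite H1. auto. }
  subst g'. f_equal; apply proof_irrelevance.
Qed.

(* Composition in diagram order, so that right actions induce homomorphisms. *)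
Definition perm_mul (p q : perm_of) : perm_of.
Proof.
  refine (mk_perm (fun x => perm_fun q (perm_fun p x)) (fun x => perm_inv_fun p (perm_inv_fun q x)) _ _);
  intro x; rewrite ?perm_funK, ?perm_inv_funK; auto.
Defined.

Definition perm_one : perm_of := mk_perm (fun x => x) (fun x => x) (fun _ => eq_refl) (fun _ => eq_refl).

Definition perm_inv (p : perm_of) : perm_of :=
  mk_perm (perm_inv_fun p) (perm_fun p) (perm_inv_funK p) (perm_funK p).

Definition sym_group : group.
Proof.
  refine (Group perm_of perm_mul perm_one perm_inv _ _ _ _ _); intros; apply perm_ext; intro; simpl;
  rewrite ?perm_funK, ?perm_inv_funK; reflexivity.
Defined.

End SymmetricGroup.

Lemma sym_group_mul_fun {X : Type} (p q : sym_group X) x :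
  perm_fun X (gmul p q) x = perm_fun X q (perm_fun X p x).
Proof. reflexivity. Qed.

Lemma sym_group_one_fun {X : Type} x : perm_fun X (@gone (sym_group X)) x = x.
Proof. reflexivity. Qed.

(** * Normal forms in an amalgamated product *)

Section PartialIsomorphism.
Variables (H K : group) (A : H -> Prop) (B : K -> Prop) (phi : H -> K).
Hypotheses (HA : is_subgroup A) (Hphi : is_iso_on A B phi).

Definition phiinv (k : K) : H := epsilon (inhabits gone) (fun a => A a /\ phi a = k).

Lemma phiinv_spec k : B k -> A (phiinv k) /\ phi (phiinv k) = k.
Proof. intro Bk. unfold phiinv. apply epsilon_spec. destruct Hphi as (_ & _ & _ & S). auto. Qed.

Lemma phi_mem a : A a -> B (phi a). Proof. apply Hphi. Qed.

Lemma phi_mul a a' : A a -> A a' -> phi (gmul a a') = gmul (phi a) (phi a'). Proof. apply Hphi. Qed.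

Lemma phiinv_phi a : A a -> phiinv (phi a) = a.
Proof.
  intro Aa. destruct (phiinv_spec (phi a)) as [X Y]. { now apply phi_mem. }
  destruct Hphi as (_ & _ & I & _). apply I; auto.
Qed.

Lemma phiinv_mul k k' : B k -> B k' -> phiinv (gmul k k') = gmul (phiinv k) (phiinv k').
Proof.
  intros Bk Bk'. destruct (phiinv_spec k) as [X1 Y1]; auto. destruct (phiinv_spec k') as [X2 Y2]; auto.
  rewrite <- (phiinv_phi (gmul (phiinv k) (phiinv k'))) by (apply HA; auto). rewrite phi_mul, Y1, Y2; auto.
Qed.

Lemma is_iso_on_phiinv : is_iso_on B A phiinv.
Proof.
  split; [|split; [|split]].
  - intros b Bb. apply phiinv_spec; auto.
  - intros b b' Bb Bb'. apply phiinv_mul; auto.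
  - intros b b' Bb Bb' E. destruct (phiinv_spec b Bb) as [_ E1]. destruct (phiinv_spec b' Bb') as [_ E2]. congruence.
  - intros a Aa. exists (phi a). split. apply phi_mem; auto. apply phiinv_phi; auto.
Qed.

End PartialIsomorphism.

Section NormalForms.
Variables (H K : group) (A : H -> Prop) (B : K -> Prop) (phi : H -> K).
Hypotheses (HA : is_subgroup A) (HB : is_subgroup B) (Hphi : is_iso_on A B phi).

Let A1 := subgroup_one H A HA. Let AM := subgroup_mul H A HA. Let AV := subgroup_inv H A HA.
Let B1 := subgroup_one K B HB. Let BM := subgroup_mul K B HB. Let BV := subgroup_inv K B HB.

Notation phiinv := (phiinv H K A phi).
Notation phiinv_spec := (phiinv_spec H K A B phi Hphi).
Notation phi_mem := (phi_mem H K A B phi Hphi).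
Notation phi_mul := (phi_mul H K A B phi Hphi).
Notation phiinv_phi := (phiinv_phi H K A B phi Hphi).

(* A normal form [(l, a)] stands for [s_1 ... s_n a], where [l = [s_n; ...; s_1]] lists the
   syllables last first and [a] lies in [A]. *)
Definition syllable := (H + K)%type.

Definition syl_side (s : syllable) : bool := match s with inl _ => true | inr _ => false end.

Definition syl_reduced (s : syllable) : Prop :=
  match s with inl t => coset_rep H A t = t /\ ~ A t | inr t => coset_rep K B t = t /\ ~ B t end.

Fixpoint reduced (l : list syllable) : Prop :=
  match l with
  | [] => True
  | s :: l' =>
    syl_reduced s /\ reduced l' /\ match l' with [] => True | s' :: _ => syl_side s <> syl_side s' end
  end.

Definition normal_form (p : list syllable * H) : Prop := reduced (fst p) /\ A (snd p).

Definition head_not (b : bool) (l : list syllable) : Prop :=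
  match l with s :: _ => syl_side s <> b | [] => True end.

(* Right multiplication by [h] merges a trailing [H]-syllable into the [A]-part, multiplies, and
   splits off the coset representative of the result again; similarly for [K]. *)
Definition strip_H (p : list syllable * H) : list syllable * H :=
  match fst p with inl t :: r => (r, gmul t (snd p)) | _ => p end.

Definition absorb_H (q : list syllable * H) : list syllable * H :=
  if excluded_middle_informative (A (snd q)) then q
  else (inl (coset_rep H A (snd q)) :: fst q, gmul (ginv (coset_rep H A (snd q))) (snd q)).

Definition act_H (h : H) (p : list syllable * H) :=
  let q := strip_H p in absorb_H (fst q, gmul (snd q) h).

Definition strip_K (p : list syllable * H) : list syllable * K :=
  match fst p with inr t :: r => (r, gmul t (phi (snd p))) | _ => (fst p, phi (snd p)) end.

Definition absorb_K (q : list syllable * K) : list syllable * H :=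
  if excluded_middle_informative (B (snd q)) then (fst q, phiinv (snd q))
  else (inr (coset_rep K B (snd q)) :: fst q, phiinv (gmul (ginv (coset_rep K B (snd q))) (snd q))).

Definition act_K (k : K) (p : list syllable * H) :=
  let q := strip_K p in absorb_K (fst q, gmul (snd q) k).

Lemma strip_H_normal p : normal_form p -> reduced (fst (strip_H p)) /\ head_not true (fst (strip_H p)).
Proof.
  destruct p as [[|[t|t] r] a]; unfold normal_form, strip_H; simpl; intros [W Aa]; try (split; [tauto|easy]).
  destruct W as (O & W & T). split; auto. destruct r as [|s r]; simpl in *; auto.
  all: try tauto; try congruence.
Qed.

Lemma absorb_H_normal r c : reduced r -> head_not true r -> normal_form (absorb_H (r, c)).
Proof.
  intros W N. unfold absorb_H, normal_form; simpl. destruct excluded_middle_informative as [X|X]; simpl; auto.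
  split.
  - split; [|split; auto]. split. apply coset_repK; auto. apply coset_rep_notin; auto.
    destruct r; simpl in *; auto.
  - apply coset_rep_ginv_mul; auto.
Qed.

Lemma strip_absorb_H r c : head_not true r -> strip_H (absorb_H (r, c)) = (r, c).
Proof.
  intro N. unfold absorb_H; simpl. destruct excluded_middle_informative as [X|X]; simpl.
  - unfold strip_H; simpl. destruct r as [|[t|t] r]; simpl in *; auto. congruence.
  - unfold strip_H; simpl. rewrite mulKVg. auto.
Qed.

Lemma absorb_strip_H p : normal_form p -> absorb_H (strip_H p) = p.
Proof.
  destruct p as [l a]. intros [W Aa]. simpl in *.
  destruct l as [|[t|t] r]; unfold strip_H, absorb_H; simpl.
  - destruct excluded_middle_informative; tauto.
  - destruct W as ((Rt & Nt) & W & T).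
    destruct excluded_middle_informative as [X|X].
    + exfalso. apply Nt. replace t with (gmul (gmul t a) (ginv a)) by apply mulgK. auto.
    + rewrite coset_rep_mulr, Rt by auto. rewrite mulKg. auto.
  - destruct excluded_middle_informative; tauto.
Qed.

Lemma act_H_normal h p : normal_form p -> normal_form (act_H h p).
Proof. intro W. destruct (strip_H_normal p W). unfold act_H. apply absorb_H_normal; auto. Qed.

Lemma act_H_mul h h' p : normal_form p -> act_H h' (act_H h p) = act_H (gmul h h') p.
Proof.
  intro W. destruct (strip_H_normal p W) as [W1 N1]. unfold act_H at 2. unfold act_H.
  rewrite strip_absorb_H by auto. simpl. rewrite gmulA. auto.
Qed.

Lemma act_H_one p : normal_form p -> act_H gone p = p.
Proof. intro W. unfold act_H. rewrite gmul1r. rewrite <- surjective_pairing. apply absorb_strip_H; auto. Qed.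

Lemma strip_K_normal p : normal_form p -> reduced (fst (strip_K p)) /\ head_not false (fst (strip_K p)).
Proof.
  destruct p as [[|[t|t] r] a]; unfold normal_form, strip_K; simpl; intros [W Aa]; try (split; [tauto|easy]).
  destruct W as (O & W & T). split; auto. destruct r as [|s r]; simpl; auto.
Qed.

Lemma absorb_K_normal r c : reduced r -> head_not false r -> normal_form (absorb_K (r, c)).
Proof.
  intros W N. unfold absorb_K, normal_form; simpl. destruct excluded_middle_informative as [X|X]; simpl; auto.
  - split; auto. apply phiinv_spec; auto.
  - split.
    + split; [|split; auto]. split. apply coset_repK; auto. apply coset_rep_notin; auto.
      destruct r; simpl in *; auto.
    + apply phiinv_spec. apply coset_rep_ginv_mul; auto.
Qed.

Lemma strip_absorb_K r c : head_not false r -> strip_K (absorb_K (r, c)) = (r, c).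
Proof.
  intro N. unfold absorb_K; simpl. destruct excluded_middle_informative as [X|X]; simpl.
  - unfold strip_K; simpl. destruct (phiinv_spec c X) as [_ E]. rewrite E.
    destruct r as [|[t|t] r]; simpl in *; auto. congruence.
  - unfold strip_K; simpl. destruct (phiinv_spec (gmul (ginv (coset_rep K B c)) c)) as [_ E].
    apply coset_rep_ginv_mul; auto. rewrite E, mulKVg. auto.
Qed.

Lemma absorb_strip_K p : normal_form p -> absorb_K (strip_K p) = p.
Proof.
  destruct p as [l a]. intros [W Aa]. simpl in *. pose proof (phi_mem a Aa) as Ba.
  destruct l as [|[t|t] r]; unfold strip_K, absorb_K; simpl.
  - destruct excluded_middle_informative; try tauto. rewrite phiinv_phi; auto.
  - destruct excluded_middle_informative; try tauto. rewrite phiinv_phi; auto.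
  - destruct W as ((Rt & Nt) & W & T).
    destruct excluded_middle_informative as [X|X].
    + exfalso. apply Nt. replace t with (gmul (gmul t (phi a)) (ginv (phi a))) by apply mulgK. auto.
    + rewrite coset_rep_mulr, Rt by auto. rewrite mulKg, phiinv_phi; auto.
Qed.

Lemma act_K_normal h p : normal_form p -> normal_form (act_K h p).
Proof. intro W. destruct (strip_K_normal p W). unfold act_K. apply absorb_K_normal; auto. Qed.

Lemma act_K_mul h h' p : normal_form p -> act_K h' (act_K h p) = act_K (gmul h h') p.
Proof.
  intro W. destruct (strip_K_normal p W) as [W1 N1]. unfold act_K at 2. unfold act_K.
  rewrite strip_absorb_K by auto. simpl. rewrite gmulA. auto.
Qed.

Lemma act_K_one p : normal_form p -> act_K gone p = p.
Proof. intro W. unfold act_K. rewrite gmul1r. rewrite <- surjective_pairing. apply absorb_strip_K; auto. Qed.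

Lemma act_H_K_agree a p : A a -> normal_form p -> act_H a p = act_K (phi a) p.
Proof.
  intros Aa [W Aa0]. destruct p as [l a0]. simpl in *.
  destruct l as [|[t|t] r]; unfold act_H, act_K, strip_H, strip_K, absorb_H, absorb_K; simpl.
  - destruct excluded_middle_informative as [X|X]; [|exfalso; auto].
    destruct excluded_middle_informative as [Y|Y]; [|exfalso; apply Y; apply BM; apply phi_mem; auto].
    rewrite <- phi_mul, phiinv_phi; auto.
  - destruct W as ((Rt & Nt) & W & T).
    destruct excluded_middle_informative as [X|X].
    + exfalso. apply Nt. replace t with (gmul (gmul (gmul t a0) a) (ginv (gmul a0 a))).
      * auto. * rewrite <- (gmulA _ t a0 a), mulgK. auto.
    + destruct excluded_middle_informative as [Y|Y]; [|exfalso; apply Y; apply BM; apply phi_mem; auto].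
      rewrite <- phi_mul, phiinv_phi by auto. rewrite <- gmulA, coset_rep_mulr, Rt by auto. rewrite mulKg. auto.
  - destruct W as ((Rt & Nt) & W & T).
    destruct excluded_middle_informative as [X|X]; [|exfalso; auto].
    destruct excluded_middle_informative as [Y|Y].
    + exfalso. apply Nt. replace t with (gmul (gmul (gmul t (phi a0)) (phi a)) (ginv (gmul (phi a0) (phi a)))).
      * apply BM; auto. apply BV. apply BM; apply phi_mem; auto.
      * rewrite <- (gmulA _ t (phi a0) (phi a)), mulgK. auto.
    + rewrite <- (gmulA _ t (phi a0) (phi a)), coset_rep_mulr, Rt; auto. rewrite mulKg, <- phi_mul, phiinv_phi; auto.
      apply BM; apply phi_mem; auto.
Qed.

Definition nform := {p : list syllable * H | normal_form p}.

Lemma nform_eq (p q : nform) : proj1_sig p = proj1_sig q -> p = q.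
Proof. destruct p, q; simpl. intro; subst. f_equal. apply proof_irrelevance. Qed.

Definition nform_act_H (h : H) (w : nform) : nform :=
  exist _ (act_H h (proj1_sig w)) (act_H_normal h _ (proj2_sig w)).

Definition nform_act_K (k : K) (w : nform) : nform :=
  exist _ (act_K k (proj1_sig w)) (act_K_normal k _ (proj2_sig w)).

Definition perm_H (h : H) : sym_group nform.
Proof.
  refine (mk_perm nform (nform_act_H h) (nform_act_H (ginv h)) _ _); intro w; apply nform_eq; simpl;
  rewrite act_H_mul by (try apply act_H_normal; apply proj2_sig);
  [rewrite gmulVr|rewrite gmulVl]; apply act_H_one; apply proj2_sig.
Defined.

Definition perm_K (k : K) : sym_group nform.
Proof.
  refine (mk_perm nform (nform_act_K k) (nform_act_K (ginv k)) _ _); intro w; apply nform_eq; simpl;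
  rewrite act_K_mul by (try apply act_K_normal; apply proj2_sig);
  [rewrite gmulVr|rewrite gmulVl]; apply act_K_one; apply proj2_sig.
Defined.

Lemma perm_H_hom : is_hom perm_H.
Proof.
  intros x y. apply perm_ext. intro w. rewrite sym_group_mul_fun. unfold perm_H. cbn [perm_fun].
  apply nform_eq. simpl. rewrite act_H_mul; auto. apply proj2_sig.
Qed.

Lemma perm_K_hom : is_hom perm_K.
Proof.
  intros x y. apply perm_ext. intro w. rewrite sym_group_mul_fun. unfold perm_K. cbn [perm_fun].
  apply nform_eq. simpl. rewrite act_K_mul; auto. apply proj2_sig.
Qed.

Lemma perm_H_K_agree a : A a -> perm_H a = perm_K (phi a).
Proof.
  intro Aa. apply perm_ext. intro w. unfold perm_H, perm_K. cbn [perm_fun]. apply nform_eq. simpl.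
  apply act_H_K_agree; auto. apply proj2_sig.
Qed.

End NormalForms.

Section Span.
Variables (G : group) (S : G -> Prop).

Definition in_span (g : G) : Prop := exists l, word_in S l /\ word_prod l = g.

Lemma in_span_mul x y : in_span x -> in_span y -> in_span (gmul x y).
Proof.
  intros (l1 & W1 & P1) (l2 & W2 & P2). exists (l1 ++ l2). split.
  - apply Forall_app; auto.
  - rewrite word_prod_app. congruence.
Qed.

Lemma in_span_one : in_span gone. Proof. exists []. split; [constructor|auto]. Qed.

Lemma in_span_inv x : in_span x -> in_span (ginv x).
Proof. intros (l & W & P). exists (rev (map ginv l)). split; [apply word_in_inv; auto|rewrite word_prod_inv; congruence]. Qed.

Lemma in_span_letter x : S x -> in_span x.
Proof. intro Sx. exists [x]. split; [constructor; auto|apply gmul1r]. Qed.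

Definition span_sub := {g : G | in_span g}.

Lemma span_sub_eq (p q : span_sub) : proj1_sig p = proj1_sig q -> p = q.
Proof. destruct p, q; simpl. intro; subst. f_equal. apply proof_irrelevance. Qed.

Definition span_group : group.
Proof.
  refine (Group span_sub
    (fun p q => exist _ (gmul (proj1_sig p) (proj1_sig q)) (in_span_mul _ _ (proj2_sig p) (proj2_sig q)))
    (exist _ gone in_span_one) (fun p => exist _ (ginv (proj1_sig p)) (in_span_inv _ (proj2_sig p)))
    _ _ _ _ _); intros; apply span_sub_eq; simpl.
  - apply gmulA. - apply gmul1l. - apply gmul1r. - apply gmulVl. - apply gmulVr.
Defined.

End Span.

Section Amalgam.
Variables (H K G : group) (A : H -> Prop) (B : K -> Prop) (phi : H -> K) (iH : H -> G) (iK : K -> G).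
Hypothesis Ham : is_amalgam A phi iH iK.

Definition in_factors (g : G) : Prop := (exists h, iH h = g) \/ (exists k, iK k = g).

Lemma in_factors_letter a : in_factors a \/ in_factors (ginv a) -> in_factors a.
Proof.
  destruct Ham as (HiH & HiK & _). intros [X|[[h E]|[k E]]]; auto.
  - left. exists (ginv h). rewrite hom_inv, E, ginvK; auto.
  - right. exists (ginv k). rewrite hom_inv, E, ginvK; auto.
Qed.

(* The span of the factors receives compatible maps from [H] and [K], so uniqueness in the
   universal property forces it to be all of [G]. *)
Lemma amalgam_factor_words (g : G) : in_span G in_factors g.
Proof.
  destruct Ham as (HiH & HiK & Hc & U).
  assert (fH : forall h, in_span G in_factors (iH h)) by (intro h; apply in_span_letter; left; eauto).
  assert (fK : forall k, in_span G in_factors (iK k)) by (intro k; apply in_span_letter; right; eauto).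
  destruct (U (span_group G in_factors) (fun h => exist _ (iH h) (fH h)) (fun k => exist _ (iK k) (fK k)))
    as (u0 & Hu0 & E1 & E2 & _).
  - intros x y. apply span_sub_eq. simpl. apply HiH.
  - intros x y. apply span_sub_eq. simpl. apply HiK.
  - intros a Aa. apply span_sub_eq. simpl. auto.
  - destruct (U G iH iK HiH HiK Hc) as (u1 & Hu1 & F1 & F2 & Uq).
    assert (X1 : g = u1 g) by (apply (Uq (fun x => x)); auto; intros x y; auto).
    assert (X2 : proj1_sig (u0 g) = u1 g).
    { apply (Uq (fun x => proj1_sig (u0 x))).
      - intros x y. rewrite Hu0. auto.
      - intro h. rewrite E1. auto.
      - intro k. rewrite E2. auto. }
    rewrite X1, <- X2. apply (proj2_sig (u0 g)).
Qed.

Hypotheses (HA : is_subgroup A) (HB : is_subgroup B) (Hphi : is_iso_on A B phi).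

Lemma is_amalgam_swap : is_amalgam B (phiinv H K A phi) iK iH.
Proof.
  destruct Ham as (HiH & HiK & Hc & U). split; [|split; [|split]]; auto.
  - intros b Bb. destruct (phiinv_spec H K A B phi Hphi b Bb) as [X E].
    rewrite Hc by auto. congruence.
  - intros L f g Hf Hg Hfg. destruct (U L g f) as (u & Hu & E1 & E2 & Uq); auto.
    + intros a Aa. assert (Ba : B (phi a)) by (apply (phi_mem H K A B phi Hphi); auto).
      rewrite (Hfg _ Ba). rewrite (phiinv_phi H K A B phi Hphi); auto.
    + exists u. split; [auto|split; [auto|split; [auto|]]]. intros v Hv X Y. apply Uq; auto.
Qed.

Lemma nf_action : exists u : G -> sym_group (nform H K A B), is_hom u /\
  (forall h, u (iH h) = perm_H H K A B HA h) /\ (forall k, u (iK k) = perm_K H K A B phi HB Hphi k).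
Proof.
  destruct Ham as (_ & _ & _ & U).
  destruct (U (sym_group (nform H K A B)) (perm_H H K A B HA) (perm_K H K A B phi HB Hphi)) as (u & Hu & E1 & E2 & _).
  - apply perm_H_hom.
  - apply perm_K_hom.
  - intros a Aa. apply perm_H_K_agree; auto.
  - exists u. auto.
Qed.

End Amalgam.

(** * Separating sets in Cayley graphs *)

Lemma four_cases (a b c e : Prop) :
  ~ (a /\ b /\ c) -> ~ (a /\ b /\ e) -> ~ (a /\ c /\ e) -> ~ (b /\ c /\ e) ->
  (~ (a /\ b) /\ ~ (a /\ c) /\ ~ (a /\ e) /\ ~ (b /\ c) /\ ~ (b /\ e) /\ ~ (c /\ e)) \/
  ((a /\ b /\ ~ c /\ ~ e) \/ (a /\ c /\ ~ b /\ ~ e) \/ (a /\ e /\ ~ b /\ ~ c) \/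
   (~ a /\ ~ b /\ c /\ e) \/ (~ a /\ ~ c /\ b /\ e) \/ (~ a /\ ~ e /\ b /\ c)).
Proof. intros. destruct (classic a), (classic b), (classic c), (classic e); tauto. Qed.

Lemma four_cases_two_sides (a b c e a' b' c' e' : Prop) :
  ~ (a /\ a') -> ~ (b /\ b') -> ~ (c /\ c') -> ~ (e /\ e') ->
  ~ (~ (a' /\ b') /\ ~ (a' /\ c') /\ ~ (a' /\ e') /\ ~ (b' /\ c') /\ ~ (b' /\ e') /\ ~ (c' /\ e')) ->
  ~ (~ (a /\ b) /\ ~ (a /\ c) /\ ~ (a /\ e) /\ ~ (b /\ c) /\ ~ (b /\ e) /\ ~ (c /\ e)) ->
  ((a /\ b /\ ~ c /\ ~ e) \/ (a /\ c /\ ~ b /\ ~ e) \/ (a /\ e /\ ~ b /\ ~ c) \/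
   (~ a /\ ~ b /\ c /\ e) \/ (~ a /\ ~ c /\ b /\ e) \/ (~ a /\ ~ e /\ b /\ c)).
Proof.
  intros. destruct (classic a), (classic b), (classic c), (classic e); try tauto;
  destruct (classic a'), (classic b'), (classic c'), (classic e'); tauto.
Qed.

Ltac four_point_perm Hs n :=
  first [ assumption
        | match n with
          | S ?m => first [ apply (four_point_swap12 _ Hs); four_point_perm Hs m
                          | apply (four_point_swap23 _ Hs); four_point_perm Hs m
                          | apply (four_point_swap34 _ Hs); four_point_perm Hs m ]
          end ].

Section Separators.
Variables (G : group) (S : G -> Prop) (d : G -> G -> nat).
Hypothesis Hd : word_metric S d.

Let d_sym := word_metric_sym Hd.
Let d_triangle := word_metric_triangle Hd.

Definition adjacent (x y : G) := exists a, (S a \/ S (ginv a)) /\ y = gmul x a.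

Lemma adjacent_sym x y : adjacent x y -> adjacent y x.
Proof.
  intros [a [L E]]. exists (ginv a). split.
  - destruct L; [right; rewrite ginvK|left]; auto.
  - subst y. rewrite <- gmulA, gmulVr, gmul1r. auto.
Qed.

Lemma adjacent_dist x y : adjacent x y -> d x y <= 1.
Proof. intros [a [L E]]. subst. apply (word_metric_letter Hd); auto. Qed.

Lemma geodesic_ind (P : G -> nat -> Prop) y :
  P y 0 -> (forall x x' n, adjacent x x' -> P x' n -> P x (1 + n)) -> forall x, exists n, n <= d x y /\ P x n.
Proof.
  intros P0 Pstep x. destruct (word_metric_witness Hd x y) as (l & W & L & Pl).
  enough (P x (length l)) by eauto. clear L. revert x Pl. induction W as [|a l Wa W IH]; intros x Pl.
  - simpl in Pl. symmetry in Pl. apply eq_of_ginv_mul_one in Pl. subst. auto.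
  - apply (Pstep x (gmul x a)); [exists a; auto|]. apply IH. simpl in Pl.
    rewrite ginv_mul, <- gmulA, <- Pl, mulKg. auto.
Qed.

Lemma adjacent_lipschitz {T : Type} (dT : T -> T -> nat) (f : G -> T) :
  (forall t, dT t t = 0) -> (forall r s t, dT r t <= dT r s + dT s t) ->
  (forall x x', adjacent x x' -> dT (f x) (f x') <= 1) -> forall x y, dT (f x) (f y) <= d x y.
Proof.
  intros R0 Tri Lip x y.
  destruct (geodesic_ind (fun x n => dT (f x) (f y) <= n) y) with (x := x) as (n & L & P).
  - rewrite R0. auto.
  - intros x1 x' n Adj P. pose proof (Lip _ _ Adj). pose proof (Tri (f x1) (f x') (f y)). lia.
  - lia.
Qed.

Definition separates (D E : G -> Prop) :=
  (forall x y, adjacent x y -> D x -> ~ D y -> E x \/ E y) /\ (forall a b, E a -> E b -> d a b <= 1).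

Lemma separates_compl D E : separates D E -> separates (fun x => ~ D x) E.
Proof.
  intros [S1 S2]. split; auto. intros x y Axy Dx Dy.
  destruct (S1 y x (adjacent_sym _ _ Axy)) as [X|X]; auto.
  destruct (classic (D y)); tauto.
Qed.

Lemma separator_on_geodesic D E x y : separates D E -> D x -> ~ D y -> exists c, E c /\ d x c + d c y <= d x y.
Proof.
  intros [S1 S2] Dx Dy.
  destruct (geodesic_ind (fun x n => d x y <= n /\ (D x -> exists c, E c /\ d x c + d c y <= n)) y) with (x := x)
    as (n & L & _ & P).
  - rewrite (word_metric_refl Hd). split; [lia|tauto].
  - intros x1 x' n Adj [Ln P]. pose proof (adjacent_dist _ _ Adj). pose proof (d_triangle x1 x' y).
    split; [lia|intro Dx1].
    destruct (classic (D x')) as [Dx'|Dx'].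
    + destruct (P Dx') as (c & Ec & Hc). exists c. split; auto. pose proof (d_triangle x1 x' c). lia.
    + destruct (S1 _ _ Adj Dx1 Dx') as [Ex|Ex].
      * exists x1. rewrite (word_metric_refl Hd). split; auto. lia.
      * exists x'. split; auto. lia.
  - destruct (P Dx) as (c & Ec & Hc). exists c. split; auto. lia.
Qed.

Lemma separator_detour D E x y c : separates D E -> D x -> ~ D y -> E c -> d x c + d c y <= d x y + 2.
Proof.
  intros Sep Dx Dy Ec. destruct (separator_on_geodesic D E x y Sep Dx Dy) as [c' [Ec' Hc']].
  pose proof (proj2 Sep c c' Ec Ec'). pose proof (d_triangle x c' c). pose proof (d_triangle c c' y).
  pose proof (d_sym c c'). lia.
Qed.

Lemma four_point_split D E c x y z w :
  separates D E -> E c -> D x -> D y -> ~ D z -> ~ D w -> four_point d 4 x y z w.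
Proof.
  intros Sep Ec Dx Dy Dz Dw. unfold four_point.
  pose proof (separator_detour D E x z c Sep Dx Dz Ec). pose proof (separator_detour D E x w c Sep Dx Dw Ec).
  pose proof (separator_detour D E y z c Sep Dy Dz Ec). pose proof (separator_detour D E y w c Sep Dy Dw Ec).
  pose proof (d_triangle x c y). pose proof (d_triangle z c w). pose proof (d_triangle x c z).
  pose proof (d_triangle x c w). pose proof (d_triangle y c z). pose proof (d_triangle y c w).
  pose proof (d_sym z c). pose proof (d_sym w c). pose proof (d_sym y c). pose proof (d_sym x c). lia.
Qed.

Lemma four_point_project D E c x y z w dl : separates D E -> E c -> D x -> ~ D y -> ~ D z -> ~ D w ->
  four_point d dl c y z w -> four_point d (dl + 2) x y z w.
Proof.
  intros Sep Ec Dx Dy Dz Dw. unfold four_point.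
  pose proof (separator_detour D E x y c Sep Dx Dy Ec). pose proof (separator_detour D E x z c Sep Dx Dz Ec).
  pose proof (separator_detour D E x w c Sep Dx Dw Ec).
  pose proof (d_triangle x c y). pose proof (d_triangle x c z). pose proof (d_triangle x c w). lia.
Qed.

Lemma four_point_project_compl D E c x y z w dl : separates D E -> E c -> ~ D x -> D y -> D z -> D w ->
  four_point d dl c y z w -> four_point d (dl + 2) x y z w.
Proof.
  intros Sep Ec Dx Dy Dz Dw. apply (four_point_project (fun x => ~ D x) E c); auto. apply separates_compl; auto.
Qed.

Definition splits_two_two (D : G -> Prop) (x y z w : G) : Prop :=
  (D x /\ D y /\ ~ D z /\ ~ D w) \/ (D x /\ D z /\ ~ D y /\ ~ D w) \/ (D x /\ D w /\ ~ D y /\ ~ D z) \/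
  (~ D x /\ ~ D y /\ D z /\ D w) \/ (~ D x /\ ~ D z /\ D y /\ D w) \/ (~ D x /\ ~ D w /\ D y /\ D z).

Lemma four_point_two_two D E x y z w :
  separates D E -> (exists c, E c) -> splits_two_two D x y z w -> four_point d 4 x y z w.
Proof.
  intros Sep [c Ec] Sp. pose proof (separates_compl D E Sep) as Sep'.
  destruct Sp as [(X & Y & Z & W)|[(X & Y & Z & W)|[(X & Y & Z & W)|
    [(X & Y & Z & W)|[(X & Y & Z & W)|(X & Y & Z & W)]]]]].
  - eapply (four_point_split D); eauto.
  - assert (F : four_point d 4 x z y w) by (eapply (four_point_split D); eauto). four_point_perm d_sym 6.
  - assert (F : four_point d 4 x w y z) by (eapply (four_point_split D); eauto). four_point_perm d_sym 6.
  - assert (F : four_point d 4 x y z w) by (eapply (four_point_split (fun p => ~ D p)); eauto; tauto).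
    four_point_perm d_sym 6.
  - assert (F : four_point d 4 x z y w) by (eapply (four_point_split (fun p => ~ D p)); eauto; tauto).
    four_point_perm d_sym 6.
  - assert (F : four_point d 4 x w y z) by (eapply (four_point_split (fun p => ~ D p)); eauto; tauto).
    four_point_perm d_sym 6.
Qed.

Definition projects (R : G -> Prop) (p p' : G) : Prop :=
  p' = p \/ (R p /\ exists E, separates R E /\ E p').

Lemma four_point_project_one R p p' q1 q2 q3 dl : projects R p p' ->
  ~ R q1 -> ~ R q2 -> ~ R q3 -> four_point d dl p' q1 q2 q3 -> four_point d (dl + 2) p q1 q2 q3.
Proof.
  intros [->|(Rp & E & Sep & Ep)] N1 N2 N3 F.
  - eapply four_point_mono; [|exact F]. lia.
  - eapply four_point_project; eauto.
Qed.

Lemma four_point_project4 dl x y z w x' y' z' w' Rx Ry Rz Rw :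
  projects Rx x x' -> projects Ry y y' -> projects Rz z z' -> projects Rw w w' ->
  ~ Rx y' -> ~ Rx z' -> ~ Rx w' -> ~ Ry x -> ~ Ry z' -> ~ Ry w' ->
  ~ Rz x -> ~ Rz y -> ~ Rz w' -> ~ Rw x -> ~ Rw y -> ~ Rw z ->
  four_point d dl x' y' z' w' -> four_point d (dl + 8) x y z w.
Proof.
  intros Px Py Pz Pw. intros. replace (dl + 8) with (dl + 2 + 2 + 2 + 2) by lia.
  assert (F1 : four_point d (dl + 2) x y' z' w') by (eapply four_point_project_one; eauto).
  assert (F2 : four_point d (dl + 2 + 2) y x z' w').
  { eapply four_point_project_one; eauto. four_point_perm d_sym 1. }
  assert (F3 : four_point d (dl + 2 + 2 + 2) z x y w').
  { eapply four_point_project_one; eauto. four_point_perm d_sym 3. }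
  assert (F4 : four_point d (dl + 2 + 2 + 2 + 2) w x y z).
  { eapply four_point_project_one; eauto. four_point_perm d_sym 5. }
  four_point_perm d_sym 3.
Qed.

Definition pairwise4 (P : G -> G -> Prop) (x y z w : G) : Prop :=
  P x y /\ P x z /\ P x w /\ P y z /\ P y w /\ P z w.

Definition at_most_one (D : G -> Prop) : G -> G -> G -> G -> Prop := pairwise4 (fun p q => ~ (D p /\ D q)).

Definition no_triple (D : G -> Prop) (x y z w : G) : Prop :=
  ~ (D x /\ D y /\ D z) /\ ~ (D x /\ D y /\ D w) /\ ~ (D x /\ D z /\ D w) /\ ~ (D y /\ D z /\ D w).

End Separators.
(** * The Cayley graph of an amalgam as a tree of pieces *)

Definition amalgam_gen_set {H K G : group} (iH : H -> G) (iK : K -> G) (SH : H -> Prop) (SK : K -> Prop)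
  (g : G) : Prop := (exists h, SH h /\ iH h = g) \/ (exists k, SK k /\ iK k = g).

Section AmalgamGeometry.
Variables (H K G : group) (A : H -> Prop) (B : K -> Prop) (phi : H -> K) (iH : H -> G) (iK : K -> G).
Hypotheses (HA : is_subgroup A) (HB : is_subgroup B) (Hphi : is_iso_on A B phi) (Ham : is_amalgam A phi iH iK).
Variable u : G -> sym_group (nform H K A B).
Hypotheses (Hu : is_hom u) (HuH : forall h, u (iH h) = perm_H H K A B HA h)
  (HuK : forall k, u (iK k) = perm_K H K A B phi HB Hphi k).

Let A1 := subgroup_one H A HA. Let AM := subgroup_mul H A HA. Let AV := subgroup_inv H A HA.
Let B1 := subgroup_one K B HB.
Let HiH : is_hom iH := proj1 Ham.
Let HiK : is_hom iK := proj1 (proj2 Ham).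
Let Hc : forall a, A a -> iH a = iK (phi a) := proj1 (proj2 (proj2 Ham)).

Notation syllable := (syllable H K).
Notation strip_H := (strip_H H K).
Notation absorb_H := (absorb_H H K A).
Notation act_H := (act_H H K A).
Notation strip_K := (strip_K H K phi).
Notation absorb_K := (absorb_K H K A B phi).
Notation act_K := (act_K H K A B phi).
Notation normal_form := (normal_form H K A B).
Notation head_not := (head_not H K).
Notation syl_side := (syl_side H K).
Notation phiinv := (phiinv H K A phi).

Lemma normal_form_one : normal_form ([], gone). Proof. split; simpl; auto. Qed.

Definition nform_one : nform H K A B := exist _ ([], gone) normal_form_one.

(* Van der Waerden's trick: the normal form of [g] is the image of the empty normal form under [g]. *)
Definition nf (g : G) : list syllable * H := proj1_sig (perm_fun _ (u g) nform_one).

Lemma nf_normal g : normal_form (nf g). Proof. unfold nf. exact (proj2_sig _). Qed.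

Lemma nf_mul_H g h : nf (gmul g (iH h)) = act_H h (nf g).
Proof. unfold nf. rewrite Hu, sym_group_mul_fun, HuH. reflexivity. Qed.

Lemma nf_mul_K g k : nf (gmul g (iK k)) = act_K k (nf g).
Proof. unfold nf. rewrite Hu, sym_group_mul_fun, HuK. reflexivity. Qed.

Definition syl_val (s : syllable) : G := match s with inl t => iH t | inr t => iK t end.

Fixpoint syl_prod (l : list syllable) : G :=
  match l with [] => gone | s :: l' => gmul (syl_prod l') (syl_val s) end.

Definition nf_val (p : list syllable * H) : G := gmul (syl_prod (fst p)) (iH (snd p)).

Lemma nf_val_strip_H p : nf_val p = gmul (syl_prod (fst (strip_H p))) (iH (snd (strip_H p))).
Proof.
  destruct p as [[|[t|t] r] a]; unfold nf_val, strip_H; simpl; auto.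
  rewrite HiH, gmulA. auto.
Qed.

Lemma nf_val_absorb_H r c : nf_val (absorb_H (r, c)) = gmul (syl_prod r) (iH c).
Proof.
  unfold absorb_H; simpl. destruct excluded_middle_informative; unfold nf_val; simpl; auto.
  rewrite <- gmulA, <- HiH, mulKVg. auto.
Qed.

Lemma nf_val_act_H h p : nf_val (act_H h p) = gmul (nf_val p) (iH h).
Proof.
  unfold act_H. rewrite nf_val_absorb_H, nf_val_strip_H, HiH, gmulA. auto.
Qed.

Lemma nf_val_strip_K p : A (snd p) -> nf_val p = gmul (syl_prod (fst (strip_K p))) (iK (snd (strip_K p))).
Proof.
  intro Aa. destruct p as [[|[t|t] r] a]; unfold nf_val, strip_K; simpl in *; rewrite (Hc a Aa); auto.
  rewrite HiK, gmulA. auto.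
Qed.

Lemma nf_val_absorb_K r c : nf_val (absorb_K (r, c)) = gmul (syl_prod r) (iK c).
Proof.
  unfold absorb_K; simpl. destruct excluded_middle_informative as [X|X]; unfold nf_val; simpl; auto.
  - destruct (phiinv_spec H K A B phi Hphi c X) as [Y E]. rewrite Hc, E; auto.
  - assert (Y : B (gmul (ginv (coset_rep K B c)) c)) by (apply coset_rep_ginv_mul; auto).
    destruct (phiinv_spec H K A B phi Hphi _ Y) as [Z E]. rewrite Hc, E; auto.
    rewrite <- gmulA, <- HiK, mulKVg. auto.
Qed.

Lemma nf_val_act_K k p : normal_form p -> nf_val (act_K k p) = gmul (nf_val p) (iK k).
Proof.
  intros [W Aa]. unfold act_K. rewrite nf_val_absorb_K, (nf_val_strip_K p), HiK, gmulA; auto.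
Qed.

Lemma nf_val_action g (w : nform H K A B) :
  nf_val (proj1_sig (perm_fun _ (u g) w)) = gmul (nf_val (proj1_sig w)) g.
Proof.
  destruct (amalgam_factor_words H K G A phi iH iK Ham g) as (l & W & P). subst g. revert w.
  induction W as [|a l Wa W IH]; intro w.
  - simpl. rewrite (hom_one u Hu), sym_group_one_fun, gmul1r. auto.
  - simpl. rewrite Hu, sym_group_mul_fun, IH, gmulA. f_equal.
    destruct (in_factors_letter H K G A phi iH iK Ham a Wa) as [[h E]|[k E]]; subst a.
    + rewrite HuH. simpl. apply nf_val_act_H.
    + rewrite HuK. simpl. apply nf_val_act_K. apply proj2_sig.
Qed.

Lemma nf_valK g : nf_val (nf g) = g.
Proof. unfold nf. rewrite nf_val_action. unfold nf_val; simpl. rewrite hom_one, !gmul1l; auto. Qed.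

Lemma nf_inj x y : nf x = nf y -> x = y.
Proof. intro E. rewrite <- (nf_valK x), <- (nf_valK y), E. auto. Qed.

Definition nf_word g := fst (nf g).

Definition nf_edge g := snd (nf g).

(* [keyH g] determines the coset [g iH(H)], and [coordH g] is the position of [g] in it. *)
Definition keyH g := fst (strip_H (nf g)).

Definition coordH g := snd (strip_H (nf g)).

Definition keyK g := fst (strip_K (nf g)).

Definition coordK g := snd (strip_K (nf g)).

Lemma nf_edge_mem g : A (nf_edge g). Proof. exact (proj2 (nf_normal g)). Qed.

Lemma keyH_head g : head_not true (keyH g). Proof. exact (proj2 (strip_H_normal H K A B _ (nf_normal g))). Qed.

Lemma nf_word_reduced g : reduced H K A B (nf_word g). Proof. exact (proj1 (nf_normal g)). Qed.

Lemma strip_H_act h p : normal_form p -> strip_H (act_H h p) = (fst (strip_H p), gmul (snd (strip_H p)) h).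
Proof. intro W. unfold act_H. apply strip_absorb_H. exact (proj2 (strip_H_normal H K A B _ W)). Qed.

Lemma strip_K_act k p : normal_form p -> strip_K (act_K k p) = (fst (strip_K p), gmul (snd (strip_K p)) k).
Proof. intro W. unfold act_K. apply strip_absorb_K; auto. exact (proj2 (strip_K_normal H K A B phi _ W)). Qed.

Lemma keyH_mul g h : keyH (gmul g (iH h)) = keyH g /\ coordH (gmul g (iH h)) = gmul (coordH g) h.
Proof. unfold keyH, coordH. rewrite nf_mul_H, strip_H_act by apply nf_normal. auto. Qed.

Lemma keyK_mul g k : keyK (gmul g (iK k)) = keyK g /\ coordK (gmul g (iK k)) = gmul (coordK g) k.
Proof. unfold keyK, coordK. rewrite nf_mul_K, strip_K_act by apply nf_normal. auto. Qed.

Definition in_coset_word (b : bool) (r l : list syllable) : Prop :=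
  l = r \/ exists s, syl_side s = b /\ l = s :: r.

Lemma nf_word_coset_H g : in_coset_word true (keyH g) (nf_word g).
Proof.
  unfold keyH, nf_word. destruct (nf g) as [[|[t|t] r] a]; unfold strip_H, in_coset_word; simpl; auto.
  right. exists (inl t). auto.
Qed.

Lemma nf_word_coset_K g : in_coset_word false (keyK g) (nf_word g).
Proof.
  unfold keyK, nf_word. destruct (nf g) as [[|[t|t] r] a]; unfold strip_K, in_coset_word; simpl; auto.
  right. exists (inr t). auto.
Qed.

Lemma eq_of_keyH x y : keyH x = keyH y -> y = gmul x (iH (gmul (ginv (coordH x)) (coordH y))).
Proof.
  intro E. apply nf_inj. rewrite nf_mul_H. unfold act_H. fold (keyH x). fold (coordH x).
  rewrite mulKVg, E. unfold keyH, coordH. rewrite <- surjective_pairing.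
  rewrite (absorb_strip_H H K A B HA); auto. apply nf_normal.
Qed.

Lemma eq_of_keyK x y : keyK x = keyK y -> y = gmul x (iK (gmul (ginv (coordK x)) (coordK y))).
Proof.
  intro E. apply nf_inj. rewrite nf_mul_K. unfold act_K. fold (keyK x). fold (coordK x).
  rewrite mulKVg, E. unfold keyK, coordK. rewrite <- surjective_pairing.
  rewrite (absorb_strip_K H K A B phi HB Hphi); auto. apply nf_normal.
Qed.

Lemma strip_H_mulr l a c : strip_H (l, gmul a c) = (fst (strip_H (l, a)), gmul (snd (strip_H (l, a))) c).
Proof. destruct l as [|[t|t] r]; unfold strip_H; simpl; auto. rewrite gmulA. auto. Qed.

Lemma eq_of_nf_word x y : nf_word x = nf_word y -> y = gmul x (iH (gmul (ginv (nf_edge x)) (nf_edge y))).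
Proof.
  intro E. apply nf_inj. rewrite nf_mul_H. unfold act_H.
  assert (Px : nf x = (nf_word x, nf_edge x)) by (unfold nf_word, nf_edge; destruct (nf x); auto).
  assert (Py : nf y = (nf_word y, nf_edge y)) by (unfold nf_word, nf_edge; destruct (nf y); auto).
  rewrite Px, <- strip_H_mulr, mulKVg, E, <- Py. symmetry. apply (absorb_strip_H H K A B HA). apply nf_normal.
Qed.

Lemma coordH_of_nf_word x y :
  nf_word x = nf_word y -> coordH y = gmul (coordH x) (gmul (ginv (nf_edge x)) (nf_edge y)).
Proof.
  intro E. unfold coordH.
  assert (Px : nf x = (nf_word x, nf_edge x)) by (unfold nf_word, nf_edge; destruct (nf x); auto).
  assert (Py : nf y = (nf_word y, nf_edge y)) by (unfold nf_word, nf_edge; destruct (nf y); auto).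
  rewrite Px, Py, E. rewrite <- (mulKVg _ (nf_edge x) (nf_edge y)) at 1. rewrite strip_H_mulr. auto.
Qed.

Lemma nf_word_behead x s r : nf_word x = s :: r -> exists y, nf_word y = r.
Proof.
  intro E. destruct s as [t|t].
  - exists (gmul x (iH (ginv (coordH x)))).
    assert (Kx : keyH x = r).
    { unfold keyH. unfold nf_word in E. destruct (nf x) as [l a]. simpl in *. subst l. auto. }
    destruct (keyH_mul x (ginv (coordH x))) as [E1 E2]. rewrite gmulVr in E2.
    set (y := gmul x (iH (ginv (coordH x)))) in *.
    assert (Py : nf y = absorb_H (keyH y, coordH y)).
    { unfold keyH, coordH. rewrite <- surjective_pairing, (absorb_strip_H H K A B HA); auto. apply nf_normal. }
    unfold nf_word. rewrite Py, E1, E2, Kx. unfold absorb_H; simpl.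
    destruct excluded_middle_informative; simpl; auto. exfalso; auto.
  - exists (gmul x (iK (ginv (coordK x)))).
    assert (Kx : keyK x = r).
    { unfold keyK. unfold nf_word in E. destruct (nf x) as [l a]. simpl in *. subst l. auto. }
    destruct (keyK_mul x (ginv (coordK x))) as [E1 E2]. rewrite gmulVr in E2.
    set (y := gmul x (iK (ginv (coordK x)))) in *.
    assert (Py : nf y = absorb_K (keyK y, coordK y)).
    { unfold keyK, coordK. rewrite <- surjective_pairing, (absorb_strip_K H K A B phi HB Hphi); auto.
      apply nf_normal. }
    unfold nf_word. rewrite Py, E1, E2, Kx. unfold absorb_K; simpl.
    destruct excluded_middle_informative; simpl; auto. exfalso; auto.
Qed.

Lemma nf_word_suffix x Q : (exists m, nf_word x = m ++ Q) -> exists c, nf_word c = Q.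
Proof.
  intros [m E]. revert x E. induction m as [|s m IH]; intros x E.
  - eauto.
  - simpl in E. destruct (nf_word_behead x s (m ++ Q) E) as [y Ey]. eapply IH; eauto.
Qed.

Lemma in_coset_word_suffix b r l1 l2 m s0 r0 :
  in_coset_word b r l1 -> in_coset_word b r l2 -> l1 = m ++ s0 :: r0 ->
  (exists m', l2 = m' ++ s0 :: r0) \/ (l1 = s0 :: r0 /\ r = r0 /\ syl_side s0 = b /\ m = []).
Proof.
  intros [X|[s1 [T1 X]]] S2 E; subst l1.
  - left. destruct S2 as [Y|[s2 [T2 Y]]]; subst l2. eauto. exists (s2 :: m). rewrite E. auto.
  - destruct m as [|a m].
    + simpl in E. injection E as -> ->. right. auto.
    + simpl in E. injection E as -> ->. left.
      destruct S2 as [Y|[s2 [T2 Y]]]; subst l2. eauto. exists (s2 :: m). auto.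
Qed.

Lemma in_coset_word_below b r l1 l2 Q : in_coset_word b r l1 -> in_coset_word b r l2 ->
  (exists m, l1 = m ++ Q) -> ~ (exists m, l2 = m ++ Q) -> l1 = Q.
Proof.
  intros S1 S2 [m E] N. destruct S1 as [X|[s1 [T1 X]]]; subst l1.
  - exfalso. apply N. destruct S2 as [Y|[s2 [T2 Y]]]; subst l2. eauto. exists (s2 :: m). rewrite E. auto.
  - destruct m as [|a m]; auto. simpl in E. injection E as -> ->. exfalso. apply N.
    destruct S2 as [Y|[s2 [T2 Y]]]; subst l2. eauto. exists (s2 :: m). auto.
Qed.

Definition below_side_word (Q : list syllable) (c : bool) (l : list syllable) : Prop :=
  exists m s, syl_side s = c /\ l = m ++ s :: Q.

Lemma in_coset_word_below_side b r l1 l2 Q c : in_coset_word b r l1 -> in_coset_word b r l2 ->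
  below_side_word Q c l1 -> ~ below_side_word Q c l2 -> l2 = Q.
Proof.
  intros S1 S2 (m & s & T & E) N. destruct S1 as [X|[s1 [T1 X]]]; subst l1.
  - exfalso. apply N. destruct S2 as [Y|[s2 [T2 Y]]]; subst l2. exists m, s. auto.
    exists (s2 :: m), s. rewrite E. auto.
  - destruct m as [|a m].
    + simpl in E. injection E as -> ->. destruct S2 as [Y|[s2 [T2 Y]]]; subst l2; auto.
      exfalso. apply N. exists [], s2. split; auto. congruence.
    + simpl in E. injection E as -> ->. exfalso. apply N.
      destruct S2 as [Y|[s2 [T2 Y]]]; subst l2. exists m, s; auto. exists (s2 :: m), s. auto.
Qed.

Variables (SH : H -> Prop) (SK : K -> Prop) (dH : H -> H -> nat) (dK : K -> K -> nat) (d : G -> G -> nat).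
Hypotheses (HdH : word_metric SH dH) (SA : forall a, A a -> SH a).
Notation gen_set := (amalgam_gen_set iH iK SH SK).
Hypothesis Hd : word_metric gen_set d.

Notation adjacent := (adjacent G gen_set).
Notation separates := (separates G gen_set d).
Notation projects := (projects G gen_set d).
Let d_sym := word_metric_sym Hd.

Lemma letter_cases a : gen_set a \/ gen_set (ginv a) ->
  (exists h, (SH h \/ SH (ginv h)) /\ a = iH h) \/ (exists k, (SK k \/ SK (ginv k)) /\ a = iK k).
Proof.
  intros [[[h [S E]]|[k [S E]]]|[[h [S E]]|[k [S E]]]].
  - left. exists h. auto.
  - right. exists k. auto.
  - left. exists (ginv h). rewrite ginvK. split; auto. rewrite hom_inv, E, ginvK; auto.
  - right. exists (ginv k). rewrite ginvK. split; auto. rewrite hom_inv, E, ginvK; auto.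
Qed.

Lemma adjacent_coset_word x y : adjacent x y ->
  exists b r, in_coset_word b r (nf_word x) /\ in_coset_word b r (nf_word y).
Proof.
  intros [a [L E]]. subst y. destruct (letter_cases a L) as [[h [_ ->]]|[k [_ ->]]].
  - exists true, (keyH x). split; [|rewrite <- (proj1 (keyH_mul x h))]; apply nf_word_coset_H.
  - exists false, (keyK x). split; [|rewrite <- (proj1 (keyK_mul x k))]; apply nf_word_coset_K.
Qed.

Lemma nf_split x : nf x = (nf_word x, nf_edge x).
Proof. unfold nf_word, nf_edge. destruct (nf x); auto. Qed.

Lemma keyH_eq_iff x r0 :
  head_not true r0 -> (keyH x = r0 <-> (nf_word x = r0 \/ exists t, nf_word x = inl t :: r0)).
Proof.
  intro N. split.
  - intro E. destruct (nf_word_coset_H x) as [X|[s [T X]]]; rewrite E in X; auto.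
    destruct s as [t|t]; simpl in T; try discriminate. right. eauto.
  - unfold keyH. rewrite nf_split. intros [X|[t X]]; rewrite X; unfold strip_H; simpl; auto.
    destruct r0 as [|[t|t] r]; simpl in *; auto. congruence.
Qed.

Lemma coordH_inl x t r0 : nf_word x = inl t :: r0 -> coordH x = gmul t (nf_edge x).
Proof. intro E. unfold coordH. rewrite nf_split, E. reflexivity. Qed.

Lemma coordH_no_inl x : head_not true (nf_word x) -> coordH x = nf_edge x.
Proof.
  intro N. unfold coordH. rewrite nf_split. destruct (nf_word x) as [|[t|t] r]; simpl in *; auto. congruence.
Qed.

Lemma dH_mul_A h a : A a -> dH h (gmul h a) <= 1.
Proof. intro Aa. apply (word_metric_letter HdH); auto. Qed.

Lemma dH_sym h h' : dH h h' = dH h' h. Proof. apply (word_metric_sym HdH); auto. Qed.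

Section Rho.
Variable r0 : list syllable.
Hypothesis Nr0 : head_not true r0.

Definition below_H (x : G) (t : H) := exists m, nf_word x = m ++ inl t :: r0.

(* Retraction onto the [H]-piece with key [r0].  Points not beyond an [H]-syllable attached to
   [r0] go to [gone], which is within distance 1 of their actual projection, a coordinate in [A]. *)
Definition retract_H (x : G) : H :=
  if excluded_middle_informative (keyH x = r0) then coordH x
  else if excluded_middle_informative (exists t, below_H x t) then epsilon (inhabits gone) (below_H x)
  else gone.

Lemma below_H_uniq x t t' : below_H x t -> below_H x t' -> t = t'.
Proof.
  intros [m E] [m' E']. rewrite E in E'. apply app_cons_inj in E'. destruct E' as [X _]. congruence.
Qed.

Lemma retract_H_in x : keyH x = r0 -> retract_H x = coordH x.
Proof. intro E. unfold retract_H. destruct excluded_middle_informative; tauto. Qed.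

Lemma retract_H_below x t : keyH x <> r0 -> below_H x t -> retract_H x = t.
Proof.
  intros N D. unfold retract_H. destruct excluded_middle_informative; try tauto.
  destruct excluded_middle_informative as [X|X]. 2: exfalso; eauto.
  apply (below_H_uniq x). apply epsilon_spec. auto. auto.
Qed.

Lemma retract_H_away x : keyH x <> r0 -> ~ (exists t, below_H x t) -> retract_H x = gone.
Proof. intros N D. unfold retract_H. do 2 (destruct excluded_middle_informative; try tauto). Qed.

Lemma retract_H_eq x y : keyH x <> r0 -> keyH y <> r0 ->
  (forall t, below_H x t <-> below_H y t) -> retract_H x = retract_H y.
Proof.
  intros Nx Ny F. destruct (excluded_middle_informative (exists t, below_H x t)) as [[t D]|D].
  - rewrite (retract_H_below x t), (retract_H_below y t); auto. apply F; auto.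
  - rewrite !retract_H_away; auto. intros [t Dt]. apply D. exists t. apply F; auto.
Qed.

Lemma below_H_coset b r x y t : in_coset_word b r (nf_word x) -> in_coset_word b r (nf_word y) ->
  (b = true -> r <> r0) -> below_H x t -> below_H y t.
Proof.
  intros Sx Sy N [m D]. destruct (in_coset_word_suffix _ _ _ _ _ _ _ Sx Sy D) as [[m' D']|(_ & R & T & _)].
  - exists m'. auto.
  - simpl in T. subst b. exfalso. exact (N eq_refl R).
Qed.

Lemma retract_H_lip_H x h : SH h \/ SH (ginv h) -> dH (retract_H x) (retract_H (gmul x (iH h))) <= 1.
Proof.
  intro Sh. destruct (keyH_mul x h) as [E1 E2]. set (y := gmul x (iH h)) in *.
  destruct (excluded_middle_informative (keyH x = r0)) as [X|X].
  - rewrite retract_H_in, (retract_H_in y), E2 by congruence. apply (word_metric_letter HdH); auto.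
  - assert (Sx := nf_word_coset_H x). assert (Sy := nf_word_coset_H y). rewrite E1 in Sy.
    rewrite (retract_H_eq x y); [rewrite (word_metric_refl HdH); auto|auto|congruence|].
    intro t. split; apply below_H_coset with true (keyH x); auto.
Qed.

Lemma coset_word_K_both_in l1 l2 r : in_coset_word false r l1 -> in_coset_word false r l2 ->
  (l1 = r0 \/ exists t, l1 = inl t :: r0) -> (l2 = r0 \/ exists t, l2 = inl t :: r0) -> l1 = l2.
Proof.
  intros [X|[s1 [T1 X]]] [Y|[s2 [T2 Y]]] I1 I2; subst; auto.
  - destruct I2 as [Y|[t Y]]; try (destruct s2; discriminate). subst r0.
    destruct I1 as [X|[t X]].
    + apply (f_equal (@length _)) in X. simpl in X. unfold syllable in *. lia.
    + apply (f_equal (@length _)) in X. simpl in X. unfold syllable in *. lia.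
  - destruct I1 as [X|[t X]]; try (destruct s1; discriminate). subst r0.
    destruct I2 as [X|[t X]].
    + apply (f_equal (@length _)) in X. simpl in X. unfold syllable in *. lia.
    + apply (f_equal (@length _)) in X. simpl in X. unfold syllable in *. lia.
  - destruct I1 as [X|[t X]]; try (destruct s1; discriminate).
    destruct I2 as [Y|[t Y]]; try (destruct s2; discriminate). congruence.
Qed.

Lemma coset_word_K_in_out l1 l2 r : in_coset_word false r l1 -> in_coset_word false r l2 ->
  (l1 = r0 \/ exists t, l1 = inl t :: r0) -> ~ (l2 = r0 \/ exists t, l2 = inl t :: r0) ->
  (exists t s, l1 = inl t :: r0 /\ l2 = s :: inl t :: r0) \/ (l1 = r0 /\ forall t m, l2 <> m ++ inl t :: r0).
Proof.
  intros S1 S2 I1 I2. destruct S1 as [X|[s1 [T1 X]]]; subst l1.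
  - destruct S2 as [Y|[s2 [T2 Y]]]; subst l2. tauto.
    destruct I1 as [X|[t X]].
    + subst r. right. split; auto. intros t m E. destruct m as [|a m].
      * simpl in E. injection E as E1. subst s2. simpl in T2. discriminate.
      * simpl in E. injection E as _ E. apply (f_equal (@length _)) in E. rewrite length_app in E.
        simpl in E. unfold syllable in *. lia.
    + left. exists t, s2. subst. auto.
  - destruct I1 as [X|[t X]]; [|destruct s1; discriminate]. right. split; auto.
    intros t m E. subst r0. apply (f_equal (@length _)) in E. rewrite length_app in E. simpl in E.
    destruct S2 as [Y|[s2 [T2 Y]]]; subst l2; simpl in E; unfold syllable in *; lia.
Qed.

Lemma retract_H_lip_K_exit x y k :
  y = gmul x (iK k) -> keyH x = r0 -> keyH y <> r0 -> dH (retract_H x) (retract_H y) <= 1.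
Proof.
  intros Ey Ix Oy. destruct (keyK_mul x k) as [E1 _]. rewrite <- Ey in E1.
  assert (Sx := nf_word_coset_K x). assert (Sy := nf_word_coset_K y). rewrite E1 in Sy.
  rewrite (retract_H_in x Ix).
  rewrite (keyH_eq_iff x r0 Nr0) in Ix. rewrite (keyH_eq_iff y r0 Nr0) in Oy.
  destruct (coset_word_K_in_out _ _ _ Sx Sy Ix Oy) as [(t & s & X & Y)|(X & Y)].
  - rewrite (coordH_inl x t r0 X). rewrite (retract_H_below y t).
    + replace t with (gmul (gmul t (nf_edge x)) (ginv (nf_edge x))) at 2 by apply mulgK.
      apply dH_mul_A. apply AV. apply nf_edge_mem.
    + rewrite (keyH_eq_iff y r0 Nr0). auto.
    + exists [s]. auto.
  - rewrite coordH_no_inl by (rewrite X; auto). rewrite retract_H_away.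
    + rewrite <- (gmulVr H (nf_edge x)). apply dH_mul_A. apply AV. apply nf_edge_mem.
    + rewrite (keyH_eq_iff y r0 Nr0). auto.
    + intros [t [m D]]. eapply Y; eauto.
Qed.

Lemma retract_H_lip_K x k : dH (retract_H x) (retract_H (gmul x (iK k))) <= 1.
Proof.
  set (y := gmul x (iK k)). assert (Ey : y = gmul x (iK k)) by auto.
  destruct (keyK_mul x k) as [E1 _]. fold y in E1.
  assert (Sx := nf_word_coset_K x). assert (Sy := nf_word_coset_K y). rewrite E1 in Sy.
  destruct (excluded_middle_informative (keyH x = r0)) as [Ix|Ox];
  destruct (excluded_middle_informative (keyH y = r0)) as [Iy|Oy].
  - rewrite !retract_H_in by auto.
    assert (R : nf_word x = nf_word y).
    { apply (coset_word_K_both_in _ _ _ Sx Sy); apply keyH_eq_iff; auto. }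
    rewrite (coordH_of_nf_word x y R). apply dH_mul_A, AM; [apply AV|]; apply nf_edge_mem.
  - apply (retract_H_lip_K_exit x y k); auto.
  - rewrite dH_sym. apply (retract_H_lip_K_exit y x (ginv k)); auto.
    unfold y. rewrite <- gmulA, <- HiK, gmulVr, hom_one, gmul1r; auto.
  - rewrite (retract_H_eq x y); [rewrite (word_metric_refl HdH); auto|auto|auto|].
    intro t. split; apply below_H_coset with false (keyK x); auto; discriminate.
Qed.

Lemma retract_H_lip x y : adjacent x y -> dH (retract_H x) (retract_H y) <= 1.
Proof.
  intros [a [L E]]. subst y. destruct (letter_cases a L) as [[h [Sh ->]]|[k [_ ->]]].
  - apply retract_H_lip_H; auto.
  - apply retract_H_lip_K.
Qed.

Lemma retract_H_contract x y : dH (retract_H x) (retract_H y) <= d x y.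
Proof.
  apply (adjacent_lipschitz G gen_set d Hd dH retract_H (word_metric_refl HdH) (word_metric_triangle HdH)).
  exact retract_H_lip.
Qed.
End Rho.

Lemma dist_of_keyH x y : keyH x = keyH y -> d x y = dH (coordH x) (coordH y).
Proof.
  intro E.
  assert (Le : d x y <= dH (coordH x) (coordH y)).
  { destruct (word_metric_witness HdH (coordH x) (coordH y)) as (l & W & L & P).
    enough (d x y <= length (map iH l)) by (rewrite length_map in *; lia).
    apply (word_metric_le Hd).
    - apply (word_in_map iH SH); auto. intros h Sh. left. eauto.
    - rewrite word_prod_map, P by auto. rewrite (eq_of_keyH x y E) at 2. rewrite mulKg. auto. }
  pose proof (retract_H_contract (keyH x) (keyH_head x) x y) as Ge. rewrite !retract_H_in in Ge by auto. lia.
Qed.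

Lemma dist_H_piece g h1 h2 : d (gmul g (iH h1)) (gmul g (iH h2)) = dH h1 h2.
Proof.
  rewrite dist_of_keyH.
  - rewrite (proj2 (keyH_mul g h1)), (proj2 (keyH_mul g h2)). apply (word_metric_translate HdH); auto.
  - rewrite (proj1 (keyH_mul g h1)), (proj1 (keyH_mul g h2)). auto.
Qed.

Variables (dlH dlK : nat).
Hypotheses (FH : forall x y z w, four_point dH dlH x y z w) (FK : forall x y z w, four_point dK dlK x y z w).
Hypothesis HpK : forall g k1 k2, d (gmul g (iK k1)) (gmul g (iK k2)) = dK k1 k2.

Lemma four_point_H_piece x y z w :
  keyH y = keyH x -> keyH z = keyH x -> keyH w = keyH x -> four_point d dlH x y z w.
Proof.
  intros Ey Ez Ew. unfold four_point. rewrite !dist_of_keyH by congruence. apply FH.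
Qed.

Lemma four_point_K_piece x y z w :
  keyK y = keyK x -> keyK z = keyK x -> keyK w = keyK x -> four_point d dlK x y z w.
Proof.
  intros Ey Ez Ew.
  assert (Hg : forall k0 k1 k2 k3,
    four_point d dlK (gmul x (iK k0)) (gmul x (iK k1)) (gmul x (iK k2)) (gmul x (iK k3))).
  { intros. unfold four_point. rewrite !HpK. apply FK. }
  specialize (Hg gone (gmul (ginv (coordK x)) (coordK y)) (gmul (ginv (coordK x)) (coordK z))
    (gmul (ginv (coordK x)) (coordK w))).
  rewrite <- (eq_of_keyK x y), <- (eq_of_keyK x z), <- (eq_of_keyK x w) in Hg by congruence.
  rewrite hom_one, gmul1r in Hg; auto.
Qed.

(* Normal-form words, read from their end, are paths from the base vertex of the Bass-Serre tree:
   [on_edge Q] is the coset of [A] at the end of [Q] and [below Q] the subtree hanging beyond it. *)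
Definition below (Q : list syllable) (x : G) := exists m, nf_word x = m ++ Q.

Definition below_side (Q : list syllable) (c : bool) (x : G) := below_side_word Q c (nf_word x).

Definition on_edge (Q : list syllable) (x : G) := nf_word x = Q.

Lemma on_edge_diam Q a b : on_edge Q a -> on_edge Q b -> d a b <= 1.
Proof.
  unfold on_edge. intros Ea Eb. rewrite (eq_of_nf_word a b) by congruence.
  apply (adjacent_dist G gen_set d Hd). eexists; split; [|reflexivity].
  left. left. eexists; split; [|reflexivity]. apply SA. apply AM. apply AV, nf_edge_mem. apply nf_edge_mem.
Qed.

Lemma separates_below Q : separates (below Q) (on_edge Q).
Proof.
  split; [|apply on_edge_diam]. intros x y Axy Dx Dy. left.
  destruct (adjacent_coset_word x y Axy) as (b & r & S1 & S2).
  apply (in_coset_word_below b r _ _ Q S1 S2); auto.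
Qed.

Lemma separates_below_side Q c : separates (below_side Q c) (on_edge Q).
Proof.
  split; [|apply on_edge_diam]. intros x y Axy Dx Dy. right.
  destruct (adjacent_coset_word x y Axy) as (b & r & S1 & S2).
  apply (in_coset_word_below_side b r _ _ Q c S1 S2); auto.
Qed.

Lemma on_edge_exists Q x : below Q x -> exists c, on_edge Q c.
Proof. intro D. apply (nf_word_suffix x Q D). Qed.

Lemma below_cons s Q x : below (s :: Q) x -> below Q x.
Proof. intros [m E]. exists (m ++ [s]). rewrite E, <- app_assoc. auto. Qed.

Lemma on_edge_not_below Q s x : on_edge Q x -> ~ below (s :: Q) x.
Proof.
  unfold on_edge. intros E [m D]. rewrite E in D. apply (f_equal (@length _)) in D.
  rewrite length_app in D. simpl in D. unfold syllable in *. lia.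
Qed.

Lemma on_edge_not_below_side Q c x : on_edge Q x -> ~ below_side Q c x.
Proof.
  unfold on_edge, below_side, below_side_word. intros E (m & s & T & D). rewrite E in D.
  apply (f_equal (@length _)) in D.
  rewrite length_app in D. simpl in D. unfold syllable in *. lia.
Qed.

Definition in_piece (b : bool) (Q : list syllable) (x : G) := in_coset_word b Q (nf_word x).

Lemma in_piece_keyH Q x y : in_piece true Q x -> in_piece true Q y -> keyH x = keyH y.
Proof.
  assert (KH : forall z, keyH z = match nf_word z with inl _ :: r => r | l => l end).
  { intro z. unfold keyH. rewrite nf_split. destruct (nf_word z) as [|[t|t] r]; reflexivity. }
  assert (NQ : forall z s, syl_side s = true -> nf_word z = s :: Q -> keyH z = Q /\ head_not true Q).
  { intros z [t|t] T E; simpl in T; try discriminate. rewrite KH, E. split; auto.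
    pose proof (nf_word_reduced z) as W. rewrite E in W. destruct Q as [|q Q]; simpl in *; auto.
    destruct W as (_ & _ & W). intro; apply W; congruence. }
  intros [X|(s & T & X)] [Y|(s' & T' & Y)].
  - rewrite !KH, X, Y. auto.
  - destruct (NQ y s' T' Y) as [K1 N]. rewrite K1, KH, X. destruct Q as [|[q|q] Q]; simpl in *; auto. congruence.
  - destruct (NQ x s T X) as [K1 N]. rewrite K1, (KH y), Y. destruct Q as [|[q|q] Q]; simpl in *; auto. congruence.
  - rewrite (proj1 (NQ x s T X)), (proj1 (NQ y s' T' Y)). auto.
Qed.

Lemma in_piece_keyK Q x y : in_piece false Q x -> in_piece false Q y -> keyK x = keyK y.
Proof.
  assert (KH : forall z, keyK z = match nf_word z with inr _ :: r => r | l => l end).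
  { intro z. unfold keyK. rewrite nf_split. destruct (nf_word z) as [|[t|t] r]; reflexivity. }
  assert (NQ : forall z s, syl_side s = false -> nf_word z = s :: Q -> keyK z = Q /\ head_not false Q).
  { intros z [t|t] T E; simpl in T; try discriminate. rewrite KH, E. split; auto.
    pose proof (nf_word_reduced z) as W. rewrite E in W. destruct Q as [|q Q]; simpl in *; auto.
    destruct W as (_ & _ & W). intro; apply W; congruence. }
  intros [X|(s & T & X)] [Y|(s' & T' & Y)].
  - rewrite !KH, X, Y. auto.
  - destruct (NQ y s' T' Y) as [K1 N]. rewrite K1, KH, X. destruct Q as [|[q|q] Q]; simpl in *; auto. congruence.
  - destruct (NQ x s T X) as [K1 N]. rewrite K1, (KH y), Y. destruct Q as [|[q|q] Q]; simpl in *; auto. congruence.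
  - rewrite (proj1 (NQ x s T X)), (proj1 (NQ y s' T' Y)). auto.
Qed.

Definition piece_projection (b : bool) (Q : list syllable) (p p' : G) (R : G -> Prop) : Prop :=
  (p' = p /\ (forall z, ~ R z) /\ in_piece b Q p)
  \/ (exists s m, syl_side s = b /\ m <> [] /\ nf_word p = m ++ s :: Q /\
      (forall z, R z <-> below (s :: Q) z) /\ nf_word p' = s :: Q)
  \/ (below_side Q (negb b) p /\ (forall z, R z <-> below_side Q (negb b) z) /\ nf_word p' = Q).

Lemma piece_projection_exists b Q p : below Q p -> exists p' R, piece_projection b Q p p' R.
Proof.
  intros [m E]. destruct m as [|a m0].
  - exists p, (fun _ => False). left. split; auto. split; auto. left. auto.
  - destruct (exists_last (l := a :: m0) ltac:(discriminate)) as (m1 & s & Em). rewrite Em, <- app_assoc in E.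
    simpl in E. destruct (Bool.bool_dec (syl_side s) b) as [T|T].
    + destruct m1 as [|a1 m1].
      * exists p, (fun _ => False). left. split; auto. split; auto. right. exists s. auto.
      * destruct (on_edge_exists (s :: Q) p) as [c Ec]. exists (a1 :: m1); auto.
        exists c, (below (s :: Q)). right. left. exists s, (a1 :: m1). repeat split; auto; discriminate.
    + destruct (on_edge_exists Q p) as [c Ec]. exists (m1 ++ [s]). rewrite <- app_assoc. auto.
      exists c, (below_side Q (negb b)). right. right. split; [|split; [tauto|auto]].
      exists m1, s. split; auto. destruct b, (syl_side s); simpl in *; congruence.
Qed.

Lemma piece_projection_in_piece b Q p p' R : piece_projection b Q p p' R -> in_piece b Q p'.
Proof.
  intros [(X & _ & I)|[(s & m & T & N & E & R' & E')|(_ & _ & E')]].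
  - subst. auto. - right. exists s. auto. - left. auto.
Qed.

Lemma piece_projection_separated b Q p p' R : piece_projection b Q p p' R -> projects R p p'.
Proof.
  intros [(X & _ & I)|[(s & m & T & N & E & R' & E')|(D & R' & E')]]; hnf; auto; right.
  - split. apply R'. exists m. auto. exists (on_edge (s :: Q)). split; auto.
    destruct (separates_below (s :: Q)) as [S1 S2]. split; auto. intros x y Axy Rx Ry. apply S1; auto.
    apply R'; auto. rewrite <- R'; auto.
  - split. apply R'. auto. exists (on_edge Q). split; auto.
    destruct (separates_below_side Q (negb b)) as [S1 S2]. split; auto. intros x y Axy Rx Ry. apply S1; auto.
    apply R'; auto. rewrite <- R'; auto.
Qed.

Definition apart_at (b : bool) (Q : list syllable) (p q : G) : Prop :=
  (forall s, ~ (below (s :: Q) p /\ below (s :: Q) q)) /\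
  ~ (below_side Q (negb b) p /\ below_side Q (negb b) q).

Lemma apart_at_sym b Q p q : apart_at b Q p q -> apart_at b Q q p.
Proof. intros [NP NB]. split; [intro s; specialize (NP s)|]; tauto. Qed.

Lemma piece_projection_disjoint b Q pi pi' Ri pj pj' Rj :
  piece_projection b Q pi pi' Ri -> piece_projection b Q pj pj' Rj -> apart_at b Q pi pj -> ~ Ri pj /\ ~ Ri pj'.
Proof.
  intros Ai Aj [NP NB].
  destruct Ai as [(X & R0 & I)|[(s & m & T & N & E & R' & E')|(D & R' & E')]].
  - auto.
  - assert (Dpi : below (s :: Q) pi) by (exists m; auto).
    split; rewrite R'. { intro; eapply NP; eauto. }
    destruct Aj as [(X & _ & I)|[(s2 & m2 & T2 & N2 & E2 & R2 & E2')|(D2 & R2 & E2')]].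
    + subst. intro; eapply NP; eauto.
    + intros [m3 D3]. rewrite E2' in D3. destruct (cons_app_cons_inj _ _ _ _ D3) as [-> ->].
      apply (NP s). split; auto. exists m2. auto.
    + apply on_edge_not_below. auto.
  - split; rewrite R'. { intro; apply NB; auto. }
    destruct Aj as [(X & _ & I)|[(s2 & m2 & T2 & N2 & E2 & R2 & E2')|(D2 & R2 & E2')]].
    + subst. intro; apply NB; auto.
    + intros (m3 & s3 & T3 & D3). rewrite E2' in D3. destruct (cons_app_cons_inj _ _ _ _ D3) as [-> ->].
      destruct b, (syl_side s3); simpl in *; congruence.
    + apply on_edge_not_below_side. auto.
Qed.

Lemma four_point_piece b Q x y z w : below Q x -> below Q y -> below Q z -> below Q w ->
  (forall s, at_most_one G (below (s :: Q)) x y z w) -> at_most_one G (below_side Q (negb b)) x y z w ->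
  four_point d ((if b then dlH else dlK) + 8) x y z w.
Proof.
  intros Dx Dy Dz Dw NP NB.
  assert (Ap : pairwise4 G (apart_at b Q) x y z w).
  { unfold pairwise4, apart_at. destruct NB as (? & ? & ? & ? & ? & ?).
    repeat split; auto; intro s; destruct (NP s) as (? & ? & ? & ? & ? & ?); auto. }
  destruct Ap as (Axy & Axz & Axw & Ayz & Ayw & Azw).
  destruct (piece_projection_exists b Q x Dx) as (x' & Rx & Px).
  destruct (piece_projection_exists b Q y Dy) as (y' & Ry & Py).
  destruct (piece_projection_exists b Q z Dz) as (z' & Rz & Pz).
  destruct (piece_projection_exists b Q w Dw) as (w' & Rw & Pw).
  assert (F0 : four_point d (if b then dlH else dlK) x' y' z' w').
  { pose proof (piece_projection_in_piece _ _ _ _ _ Px). pose proof (piece_projection_in_piece _ _ _ _ _ Py).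
    pose proof (piece_projection_in_piece _ _ _ _ _ Pz). pose proof (piece_projection_in_piece _ _ _ _ _ Pw).
    destruct b.
    - apply four_point_H_piece; apply (in_piece_keyH Q); auto.
    - apply four_point_K_piece; apply (in_piece_keyK Q); auto. }
  pose proof (piece_projection_disjoint _ _ _ _ _ _ _ _ Px Py Axy) as [? ?].
  pose proof (piece_projection_disjoint _ _ _ _ _ _ _ _ Px Pz Axz) as [? ?].
  pose proof (piece_projection_disjoint _ _ _ _ _ _ _ _ Px Pw Axw) as [? ?].
  pose proof (piece_projection_disjoint _ _ _ _ _ _ _ _ Py Px (apart_at_sym _ _ _ _ Axy)) as [? ?].
  pose proof (piece_projection_disjoint _ _ _ _ _ _ _ _ Py Pz Ayz) as [? ?].
  pose proof (piece_projection_disjoint _ _ _ _ _ _ _ _ Py Pw Ayw) as [? ?].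
  pose proof (piece_projection_disjoint _ _ _ _ _ _ _ _ Pz Px (apart_at_sym _ _ _ _ Axz)) as [? ?].
  pose proof (piece_projection_disjoint _ _ _ _ _ _ _ _ Pz Py (apart_at_sym _ _ _ _ Ayz)) as [? ?].
  pose proof (piece_projection_disjoint _ _ _ _ _ _ _ _ Pz Pw Azw) as [? ?].
  pose proof (piece_projection_disjoint _ _ _ _ _ _ _ _ Pw Px (apart_at_sym _ _ _ _ Axw)) as [? ?].
  pose proof (piece_projection_disjoint _ _ _ _ _ _ _ _ Pw Py (apart_at_sym _ _ _ _ Ayw)) as [? ?].
  pose proof (piece_projection_disjoint _ _ _ _ _ _ _ _ Pw Pz (apart_at_sym _ _ _ _ Azw)) as [? ?].
  apply piece_projection_separated in Px, Py, Pz, Pw.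
  eapply (four_point_project4 G gen_set d Hd); eauto.
Qed.

(* 4 for a two-two split by a separator; 8 for four projections onto a piece, at cost 2 each. *)
Definition delta_branch := 4 + dlH + dlK + 8.

Lemma below_sides_disjoint Q p : ~ (below_side Q true p /\ below_side Q false p).
Proof.
  intros [(m & s & T & E) (m' & s' & T' & E')]. rewrite E in E'.
  apply app_cons_inj in E'. destruct E' as [-> _]. congruence.
Qed.

(* Either a branch or a side of the edge [Q] splits the points two against two, or all of them
   project to a single piece. *)
Lemma four_point_branch Q x y z w : below Q x -> below Q y -> below Q z -> below Q w ->
  (forall s, no_triple G (below (s :: Q)) x y z w) -> four_point d delta_branch x y z w.
Proof.
  intros Dx Dy Dz Dw NT. unfold delta_branch.
  destruct (classic (exists s, ~ at_most_one G (below (s :: Q)) x y z w)) as [[s N]|N].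
  - destruct (NT s) as (T1 & T2 & T3 & T4). unfold at_most_one, pairwise4 in N.
    destruct (four_cases _ _ _ _ T1 T2 T3 T4) as [X|X]; [tauto|].
    eapply four_point_mono;
      [|eapply (four_point_two_two G gen_set d Hd (below (s :: Q)) (on_edge (s :: Q)));
        eauto using separates_below].
    { lia. }
    destruct (classic (below (s :: Q) x)) as [X1|X1]; [eauto using on_edge_exists|].
    destruct (classic (below (s :: Q) y)) as [X2|X2]; [eauto using on_edge_exists|].
    destruct (classic (below (s :: Q) z)) as [X3|X3]; [eauto using on_edge_exists|]. tauto.
  - assert (NP : forall s, at_most_one G (below (s :: Q)) x y z w).
    { intro s. destruct (classic (at_most_one G (below (s :: Q)) x y z w)); auto. exfalso; eauto. }
    destruct (classic (at_most_one G (below_side Q false) x y z w)) as [M1|M1].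
    { eapply four_point_mono; [|apply (four_point_piece true Q); auto]. lia. }
    destruct (classic (at_most_one G (below_side Q true) x y z w)) as [M2|M2].
    { eapply four_point_mono; [|apply (four_point_piece false Q); auto]. lia. }
    eapply four_point_mono;
      [|eapply (four_point_two_two G gen_set d Hd (below_side Q true) (on_edge Q));
        eauto using separates_below_side].
    { lia. }
    { eauto using on_edge_exists. }
    unfold at_most_one, pairwise4 in *.
    apply four_cases_two_sides with (below_side Q false x) (below_side Q false y) (below_side Q false z)
      (below_side Q false w); auto using below_sides_disjoint.
Qed.

Lemma below_length Q x : below Q x -> length Q <= length (nf_word x).
Proof. intros [m E]. rewrite E, length_app. lia. Qed.

Lemma four_point_three_below_branch Q x y z w : below Q x -> below Q y -> below Q z -> ~ below Q w ->
  ~ (exists s, below (s :: Q) x /\ below (s :: Q) y /\ below (s :: Q) z) ->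
  four_point d (delta_branch + 2) w x y z.
Proof.
  intros Dx Dy Dz Dw N. destruct (on_edge_exists Q x Dx) as [c Ec].
  eapply (four_point_project_compl G gen_set d Hd (below Q) (on_edge Q) c); eauto using separates_below.
  apply (four_point_branch Q); auto.
  - exists []. auto.
  - intro s. pose proof (on_edge_not_below Q s c Ec). unfold no_triple.
    split; [|split; [|split]]; try tauto. intro; apply N; eauto.
Qed.

Lemma four_point_three_below_rec n : forall Q x y z w, length (nf_word x) - length Q <= n ->
  below Q x -> below Q y -> below Q z -> ~ below Q w -> four_point d (delta_branch + 2) w x y z.
Proof.
  induction n as [|n IH]; intros Q x y z w L Dx Dy Dz Dw;
    (destruct (classic (exists s, below (s :: Q) x /\ below (s :: Q) y /\ below (s :: Q) z)) as [[s (X & Y & Z)]|N];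
     [pose proof (below_length _ _ X); simpl in *|apply (four_point_three_below_branch Q); auto]).
  - lia.
  - apply (IH (s :: Q)); auto.
    + simpl. lia.
    + intro D. apply Dw. eapply below_cons; eauto.
Qed.

Lemma four_point_three_below Q x y z w :
  below Q x -> below Q y -> below Q z -> ~ below Q w -> four_point d (delta_branch + 2) w x y z.
Proof. apply (four_point_three_below_rec (length (nf_word x) - length Q)); auto. Qed.

Lemma four_point_below_branch Q x y z w : below Q x -> below Q y -> below Q z -> below Q w ->
  ~ (exists s, below (s :: Q) x /\ below (s :: Q) y /\ below (s :: Q) z /\ below (s :: Q) w) ->
  four_point d (delta_branch + 2) x y z w.
Proof.
  intros Dx Dy Dz Dw N4.
  destruct (classic (exists s, ~ no_triple G (below (s :: Q)) x y z w)) as [[s NT]|NT].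
  2: { eapply four_point_mono; [|apply (four_point_branch Q); auto]; [lia|].
       intro s. destruct (classic (no_triple G (below (s :: Q)) x y z w)); auto. exfalso; eauto. }
  unfold no_triple in NT.
  destruct (classic (below (s :: Q) x)) as [X|X]; destruct (classic (below (s :: Q) y)) as [Y|Y];
    destruct (classic (below (s :: Q) z)) as [Z|Z]; destruct (classic (below (s :: Q) w)) as [W|W];
    try (exfalso; apply N4; eauto; fail); try tauto.
  - assert (F : four_point d (delta_branch + 2) w x y z) by (apply (four_point_three_below (s :: Q)); auto).
    four_point_perm d_sym 6.
  - assert (F : four_point d (delta_branch + 2) z x y w) by (apply (four_point_three_below (s :: Q)); auto).
    four_point_perm d_sym 6.
  - assert (F : four_point d (delta_branch + 2) y x z w) by (apply (four_point_three_below (s :: Q)); auto).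
    four_point_perm d_sym 6.
  - assert (F : four_point d (delta_branch + 2) x y z w) by (apply (four_point_three_below (s :: Q)); auto).
    four_point_perm d_sym 6.
Qed.

Lemma four_point_below_rec n : forall Q x y z w, length (nf_word x) - length Q <= n ->
  below Q x -> below Q y -> below Q z -> below Q w -> four_point d (delta_branch + 2) x y z w.
Proof.
  induction n as [|n IH]; intros Q x y z w L Dx Dy Dz Dw;
    (destruct (classic (exists s, below (s :: Q) x /\ below (s :: Q) y /\ below (s :: Q) z /\ below (s :: Q) w))
      as [[s (X & Y & Z & W)]|N4];
     [pose proof (below_length _ _ X); simpl in *|apply (four_point_below_branch Q); auto]).
  - lia.
  - apply (IH (s :: Q)); auto. simpl. lia.
Qed.

Lemma amalgam_four_point : gromov_hyperbolic d.
Proof.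
  apply (four_point_hyperbolic d d_sym (delta_branch + 2)). intros x y z w.
  assert (D0 : forall p, below [] p) by (intro p; exists (nf_word p); rewrite app_nil_r; auto).
  apply (four_point_below_rec (length (nf_word x)) []); auto. lia.
Qed.

End AmalgamGeometry.

Lemma amalgam_dist_H_piece (H K G : group) (A : H -> Prop) (B : K -> Prop) (phi : H -> K)
  (iH : H -> G) (iK : K -> G) (HA : is_subgroup A) (HB : is_subgroup B) (Hphi : is_iso_on A B phi)
  (Ham : is_amalgam A phi iH iK) SH SK dH d :
  word_metric SH dH -> (forall a, A a -> SH a) -> word_metric (amalgam_gen_set iH iK SH SK) d ->
  forall g h1 h2, d (gmul g (iH h1)) (gmul g (iH h2)) = dH h1 h2.
Proof.
  intros. destruct (nf_action H K G A B phi iH iK Ham HA HB Hphi) as (u & Hu & E1 & E2).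
  eapply dist_H_piece; eauto.
Qed.

Lemma Exists_one {T : Type} (P : T -> Prop) x : Exists (fun Q : T -> Prop => Q x) [P] <-> P x.
Proof. rewrite Exists_cons, Exists_nil. tauto. Qed.

Section AmalgamHyperbolic.
Variables (H K G : group) (A : H -> Prop) (B : K -> Prop) (phi : H -> K) (iH : H -> G) (iK : K -> G).
Hypotheses (HA : is_subgroup A) (HB : is_subgroup B) (Hphi : is_iso_on A B phi) (Ham : is_amalgam A phi iH iK).

Lemma amalgam_dist_K_piece SH SK dK d :
  word_metric SK dK -> (forall b, B b -> SK b) -> word_metric (amalgam_gen_set iH iK SH SK) d ->
  forall g k1 k2, d (gmul g (iK k1)) (gmul g (iK k2)) = dK k1 k2.
Proof.
  intros HdK SB Hd.
  apply (amalgam_dist_H_piece K H G B A (phiinv H K A phi) iK iH HB HA (is_iso_on_phiinv H K A B phi HA Hphi)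
    (is_amalgam_swap H K G A B phi iH iK Ham Hphi) SK SH dK d); auto.
  eapply word_metric_ext; [|exact Hd]. intro a. unfold amalgam_gen_set. tauto.
Qed.

Lemma amalgam_hyperbolic SH SK dH dK d :
  word_metric SH dH -> word_metric SK dK -> (forall a, A a -> SH a) -> (forall b, B b -> SK b) ->
  gromov_hyperbolic dH -> gromov_hyperbolic dK ->
  word_metric (amalgam_gen_set iH iK SH SK) d -> gromov_hyperbolic d.
Proof.
  intros HdH HdK SA SB GH GK Hd.
  destruct (hyperbolic_four_point dH (word_metric_sym HdH) GH) as [dlH FH].
  destruct (hyperbolic_four_point dK (word_metric_sym HdK) GK) as [dlK FK].
  destruct (nf_action H K G A B phi iH iK Ham HA HB Hphi) as (u & Hu & E1 & E2).
  eapply (amalgam_four_point H K G A B phi iH iK HA HB Hphi Ham u Hu E1 E2 SH SK dH dK d HdH SA Hd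
    dlH dlK FH FK).
  apply (amalgam_dist_K_piece SH SK); auto.
Qed.

Lemma amalgam_generates SH SK : generates SH -> generates SK -> generates (amalgam_gen_set iH iK SH SK).
Proof.
  destruct Ham as (HiH & HiK & _). intros GenH GenK.
  apply (generates_of_words _ (in_factors H K G iH iK)).
  { intro g. apply (amalgam_factor_words H K G A phi iH iK Ham). }
  intros a [[h E]|[k E]]; subst a.
  - destruct (GenH h) as [l [W E]]. exists (map iH l). split.
    + apply (word_in_map iH SH); auto. intros x Sx. left. eauto.
    + rewrite word_prod_map, E; auto.
  - destruct (GenK k) as [l [W E]]. exists (map iK l). split.
    + apply (word_in_map iK SK); auto. intros x Sx. right. eauto.
    + rewrite word_prod_map, E; auto.
Qed.

Lemma weakly_hyperbolic_of_gen_set (X : list G) (Hs : list (G -> Prop)) SH SK dH dK :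
  generates SH -> generates SK -> word_metric SH dH -> word_metric SK dK ->
  (forall a, A a -> SH a) -> (forall b, B b -> SK b) -> gromov_hyperbolic dH -> gromov_hyperbolic dK ->
  (forall x, amalgam_gen_set iH iK SH SK x <-> In x X \/ Exists (fun P : G -> Prop => P x) Hs) ->
  weakly_hyperbolic G Hs.
Proof.
  intros GenH GenK HdH HdK SA SB GH GK E. exists X. cbv zeta.
  assert (Gen : generates (amalgam_gen_set iH iK SH SK)) by (apply amalgam_generates; auto).
  destruct (word_metric_exists _ Gen) as [d Hd].
  split.
  - intro g. destruct (Gen g) as [l [W P]]. exists l. split; auto. apply (word_in_ext _ _ _ _ E W).
  - exists d. split; [eapply word_metric_ext; eauto|eapply amalgam_hyperbolic; eauto].
Qed.

Lemma weakly_hyperbolic_factors : weakly_hyperbolic G [image iH (fun _ => True); image iK (fun _ => True)].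
Proof.
  assert (Full : forall X : group, generates (fun _ : X => True)).
  { intros X g. exists [g]. split; [constructor; auto|apply gmul1r]. }
  destruct (word_metric_exists _ (Full H)) as [dH HdH].
  destruct (word_metric_exists _ (Full K)) as [dK HdK].
  apply (weakly_hyperbolic_of_gen_set [] _ (fun _ => True) (fun _ => True) dH dK); auto using full_word_metric_hyperbolic.
  intro x. unfold amalgam_gen_set, image. rewrite !Exists_cons, Exists_nil. simpl. split.
  - intros [[h [_ <-]]|[k [_ <-]]]; right; [left|right; left]; eauto.
  - intros [[]|[[h [_ <-]]|[[k [_ <-]]|[]]]]; [left|right]; eauto.
Qed.

Lemma weakly_hyperbolic_amalgam_edge :
  weakly_hyperbolic H [A] -> weakly_hyperbolic K [B] -> weakly_hyperbolic G [image iH A].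
Proof.
  intros [XH [GenH [dH [HdH GH]]]] [XK [GenK [dK [HdK GK]]]]. cbv zeta in *.
  apply (weakly_hyperbolic_of_gen_set (map iH XH ++ map iK XK) _ _ _ dH dK GenH GenK); auto;
    try (intros ? ?; right; apply Exists_one; auto; fail).
  pose proof (proj1 (proj2 (proj2 Ham))) as Hc.
  intro x. unfold amalgam_gen_set, image. rewrite in_app_iff, !in_map_iff, Exists_one. split.
  - intros [[h [[I|Ah] <-]]|[k [[I|Bk] <-]]].
    + left. left. exists h. auto.
    + right. exists h. split; auto. apply (Exists_one A h); auto.
    + left. right. exists k. auto.
    + apply (Exists_one B k) in Bk. destruct (phiinv_spec H K A B phi Hphi k Bk) as [Ak E].
      right. exists (phiinv H K A phi k). rewrite Hc, E; auto.
  - intros [[[h [<- I]]|[k [<- I]]]|[a [Aa <-]]].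
    + left. exists h. auto.
    + right. exists k. auto.
    + left. exists a. split; [right; apply (Exists_one A a)|]; auto.
Qed.

End AmalgamHyperbolic.

Theorem theorem1p2 (H K G : group) (A : H -> Prop) (B : K -> Prop)
    (phi : H -> K) (iH : H -> G) (iK : K -> G) :
  is_subgroup A -> is_subgroup B -> is_iso_on A B phi ->
  is_amalgam A phi iH iK ->
  weakly_hyperbolic G [image iH (fun _ => True); image iK (fun _ => True)] /\
  (weakly_hyperbolic H [A] -> weakly_hyperbolic K [B] ->
   weakly_hyperbolic G [image iH A]).
Proof.
  intros HA HB Hphi Ham. split.
  - exact (weakly_hyperbolic_factors H K G A B phi iH iK HA HB Hphi Ham).
  - exact (weakly_hyperbolic_amalgam_edge H K G A B phi iH iK HA HB Hphi Ham).
Qed.
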